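(* Let $\{\xi,\xi_1,\xi_2\}$ be an orthonormal basis of $\mathbb{R}^3$ and let $\varrho_\xi:\mathbb{T}^3\to\mathbb{R}$ be a smooth $\mathbb{T}^3$-periodic function of the form $\varrho_\xi(x)=\phi(x\cdot\xi_1,x\cdot\xi_2)$, where $\phi:\mathbb{R}^2\to\mathbb{R}$ is a sum of translates of a single smooth, compactly supported, radially symmetric function, the translates having pairwise disjoint supports. Set $W_\xi=\varrho_\xi\,\xi$ and $\mathcal{C}=\|\nabla\varrho_\xi\|_{L^2(\mathbb{T}^3)}^2$. Then for all $k,\ell\in\{1,2,3\}$, $$\int_{\mathbb{T}^3}\Big(W_\xi^k\,\partial_{mm}W_\xi^\ell+\partial_kW_\xi^j\,\partial_\ell W_\xi^j\Big)dx=\frac{\mathcal{C}}{2}\big(\delta^{k\ell}-3\xi^k\xi^\ell\big),$$ with summation over the repeated indices $m$ and $j$. *)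

From Stdlib Require Import Reals Lra List.
From Coquelicot Require Import Coquelicot.
Open Scope R_scope.

Definition D1 (g : R -> R -> R) : R -> R -> R := fun x y => Derive (fun t => g t y) x.
Definition D2 (g : R -> R -> R) : R -> R -> R := fun x y => Derive (fun t => g x t) y.

Fixpoint iterD (s : list bool) (g : R -> R -> R) : R -> R -> R :=
  match s with
  | nil => g
  | b :: s' => (if b then D1 else D2) (iterD s' g)
  end.

Definition smooth2 (g : R -> R -> R) : Prop :=
  forall (s : list bool) (x y : R),
    ex_derive (fun t => iterD s g t y) x /\
    ex_derive (fun t => iterD s g x t) y /\
    continuous (fun p : R * R => iterD s g (fst p) (snd p)) (x, y).

Definition compactly_supported2 (g : R -> R -> R) : Prop :=
  exists M : R, forall y1 y2, y1 ^ 2 + y2 ^ 2 > M -> g y1 y2 = 0.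

Definition radial2 (g : R -> R -> R) : Prop :=
  forall y1 y2 z1 z2, y1 ^ 2 + y2 ^ 2 = z1 ^ 2 + z2 ^ 2 -> g y1 y2 = g z1 z2.

Definition translate2 (g : R -> R -> R) (c : R * R) : R -> R -> R :=
  fun y1 y2 => g (y1 - fst c) (y2 - snd c).

(* y lies in the support (closure of the non-vanishing set) of g *)
Definition in_support2 (g : R -> R -> R) (y1 y2 : R) : Prop :=
  forall eps : R, eps > 0 ->
    exists z1 z2, (y1 - z1) ^ 2 + (y2 - z2) ^ 2 < eps ^ 2 /\ g z1 z2 <> 0.

(* Vectors / points of R^3 are represented as nat -> R, only the components
   0,1,2 being relevant (index k in {1,2,3} of the paper is k-1 here). *)

Definition sum3 (f : nat -> R) : R := f 0%nat + f 1%nat + f 2%nat.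

Definition dot3 (v w : nat -> R) : R := sum3 (fun i => v i * w i).

Definition delta (k l : nat) : R := if Nat.eqb k l then 1 else 0.

Definition orthonormal3 (a b c : nat -> R) : Prop :=
  dot3 a a = 1 /\ dot3 b b = 1 /\ dot3 c c = 1 /\
  dot3 a b = 0 /\ dot3 a c = 0 /\ dot3 b c = 0.

Definition vec3 (a b c : R) : nat -> R :=
  fun i => match i with 0%nat => a | 1%nat => b | _ => c end.

Definition upd (x : nat -> R) (m : nat) (t : R) : nat -> R :=
  fun i => if Nat.eqb i m then t else x i.

Definition partial (m : nat) (F : (nat -> R) -> R) : (nat -> R) -> R :=
  fun x => Derive (fun t => F (upd x m t)) (x m).

Definition periodic3 (F : (nat -> R) -> R) : Prop :=
  forall (x : nat -> R) (k : nat), (k < 3)%nat -> F (upd x k (x k + 1)) = F x.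

(* integral over the torus T^3 = R^3 / Z^3, via the fundamental cell [0,1]^3 *)
Definition torus_int (F : (nat -> R) -> R) : R :=
  RInt (fun a => RInt (fun b => RInt (fun c => F (vec3 a b c)) 0 1) 0 1) 0 1.

(* Writing [rho x = phi (x.xi1, x.xi2)], the chain rule turns the integrand into
   [xi^k xi^l phi Lap phi + d_k rho d_l rho], a function of [(x.xi1, x.xi2)].  Its
   torus integral is an iterated integral over the cell spanned by the periods
   [(xi1^m, xi2^m)] of [phi], and the cell integral of a derivative of a periodic
   C^1 function vanishes.  Integration by parts then gives [int phi Lap phi = -C],
   and [int d_k rho d_l rho = (xi1^k xi1^l + xi2^k xi2^l) C / 2] reduces, by
   orthonormality, to [int (D1 phi)^2 = int (D2 phi)^2] and [int D1 phi D2 phi = 0].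

   These two identities come from radial symmetry.  On each bump, of centre [c],
   the angular derivative [L = (u - c1) D2 - (v - c2) D1] kills [phi], hence
   [L D1 phi = - D2 phi] and [L D2 phi = D1 phi], so that
   [L (D1 phi D2 phi) = (D1 phi)^2 - (D2 phi)^2] and
   [L ((D1 phi)^2 - (D2 phi)^2) = -4 D1 phi D2 phi].  For [A] vanishing where the
   gradient of [phi] does, [L A = D2 (A (u - c1)) - D1 (A (v - c2))] with [c] the
   centre of the bump at hand is a divergence of C^1 fields, which are periodic
   because a period of [phi] maps bump centres to bump centres; so [L A] has
   cell integral zero. *)

From Stdlib Require Import Reals Lra Lia List FunctionalExtensionality Classical ClassicalEpsilon.
From Coquelicot Require Import Coquelicot.
Open Scope R_scope.

(** * Continuity and integrals along segments in the plane *)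

Definition continuous2 (k : R -> R -> R) : Prop :=
  forall x y, continuous (fun z : R * R => k (fst z) (snd z)) (x, y).

Lemma continuous2_continuity_2d_pt k x y : continuous2 k -> continuity_2d_pt k x y.
Proof. intros H. apply continuity_2d_pt_filterlim, H. Qed.

Lemma continuous2_comp {U : UniformSpace} k (f g : U -> R) z :
  continuous2 k -> continuous f z -> continuous g z ->
  continuous (fun s => k (f s) (g s)) z.
Proof. intros Hk Hf Hg. apply (continuous_comp_2 f g k z Hf Hg), Hk. Qed.

Lemma continuous2_ext f g : (forall u v, f u v = g u v) -> continuous2 f -> continuous2 g.
Proof.
  intros E H. replace g with f; auto.
  do 2 (apply functional_extensionality; intro); auto.
Qed.

Lemma continuous2_const a : continuous2 (fun _ _ => a).
Proof. intros x y. apply continuous_const. Qed.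

Lemma continuous2_plus f g :
  continuous2 f -> continuous2 g -> continuous2 (fun u v => f u v + g u v).
Proof. intros Hf Hg x y. apply (continuous_plus (V := R_NormedModule)); [apply Hf | apply Hg]. Qed.

Lemma continuous2_mult f g :
  continuous2 f -> continuous2 g -> continuous2 (fun u v => f u v * g u v).
Proof. intros Hf Hg x y. apply (continuous_mult (K := R_AbsRing)); [apply Hf | apply Hg]. Qed.

Lemma continuous2_scal a f : continuous2 f -> continuous2 (fun u v => a * f u v).
Proof. intros; apply continuous2_mult; auto using continuous2_const. Qed.

Lemma continuous2_fst : continuous2 (fun u _ => u).
Proof. intros x y. apply continuous_fst. Qed.

Lemma continuous2_snd : continuous2 (fun _ v => v).
Proof. intros x y. apply continuous_snd. Qed.

Lemma continuous2_comp2 k f g : continuous2 k -> continuous2 f -> continuous2 g ->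
  continuous2 (fun u v => k (f u v) (g u v)).
Proof. intros Hk Hf Hg x y. apply continuous2_comp; [apply Hk | apply Hf | apply Hg]. Qed.

Lemma continuous2_affine k a b c d e f : continuous2 k ->
  continuous2 (fun u v => k (a + u * b + v * c) (d + u * e + v * f)).
Proof.
  intros Hk. apply continuous2_comp2; auto;
    repeat apply continuous2_plus; auto using continuous2_const;
    apply continuous2_mult; auto using continuous2_const, continuous2_fst, continuous2_snd.
Qed.

Definition segment_int (k : R -> R -> R) (w1 w2 : R) : R -> R -> R :=
  fun s1 s2 => RInt (fun t => k (s1 + t * w1) (s2 + t * w2)) 0 1.

Lemma continuous_along_line k s1 s2 w1 w2 t : continuous2 k ->
  continuous (fun t => k (s1 + t * w1) (s2 + t * w2)) t.
Proof.
  intros Hk. apply continuous2_comp; auto;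
    apply (continuous_plus (V := R_NormedModule)); try apply continuous_const;
    apply (continuous_mult (K := R_AbsRing)); auto using continuous_id, continuous_const.
Qed.

Lemma ex_RInt_along_line k s1 s2 w1 w2 : continuous2 k ->
  ex_RInt (fun t => k (s1 + t * w1) (s2 + t * w2)) 0 1.
Proof.
  intros Hk. apply (ex_RInt_continuous (V := R_CompleteNormedModule)).
  intros; apply continuous_along_line; auto.
Qed.

Lemma segment_int_continuous k w1 w2 : continuous2 k -> continuous2 (segment_int k w1 w2).
Proof.
  intros Hk x y.
  apply (proj1 (continuity_2d_pt_filterlim (segment_int k w1 w2) x y)).
  intros eps.
  set (M := 1 + Rabs w1 + Rabs w2).
  assert (HM1 := Rabs_pos w1). assert (HM2 := Rabs_pos w2).
  assert (He2 : 0 < eps / 2) by (generalize (cond_pos eps); lra).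
  destruct (uniform_continuity_2d k (x - M) (x + M) (y - M) (y + M)
     (fun x y _ _ => continuous2_continuity_2d_pt k x y Hk) (mkposreal _ He2)) as [d Hd].
  assert (Hd1 : 0 < Rmin d 1) by (apply Rmin_pos; [apply cond_pos | lra]).
  exists (mkposreal _ Hd1). simpl. intros u v Hu Hv.
  assert (Hux : Rabs (u - x) < d /\ Rabs (u - x) < 1) by
    (split; eapply Rlt_le_trans; eauto; [apply Rmin_l | apply Rmin_r]).
  assert (Hvy : Rabs (v - y) < d /\ Rabs (v - y) < 1) by
    (split; eapply Rlt_le_trans; eauto; [apply Rmin_l | apply Rmin_r]).
  unfold segment_int.
  rewrite <- (RInt_minus (V := R_CompleteNormedModule)) by (apply ex_RInt_along_line; auto).
  apply Rle_lt_trans with ((1 - 0) * (eps / 2)); [| simpl; lra].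
  apply abs_RInt_le_const; [lra | |].
  { apply (ex_RInt_continuous (V := R_CompleteNormedModule)). intros.
    apply (continuous_minus (V := R_NormedModule)); apply continuous_along_line; auto. }
  intros t Ht.
  assert (Htw1 : Rabs (t * w1) <= Rabs w1)
    by (rewrite Rabs_mult, (Rabs_right t) by lra; nra).
  assert (Htw2 : Rabs (t * w2) <= Rabs w2)
    by (rewrite Rabs_mult, (Rabs_right t) by lra; nra).
  apply Rabs_le_between in Htw1. apply Rabs_le_between in Htw2.
  destruct Hux as [Hux Hux1]. destruct Hvy as [Hvy Hvy1].
  apply Rabs_lt_between' in Hux1. apply Rabs_lt_between' in Hvy1.
  apply Rlt_le, Hd; unfold M; try lra.
  - replace (u + t * w1 - (x + t * w1)) with (u - x) by ring. auto.
  - replace (v + t * w2 - (y + t * w2)) with (v - y) by ring. auto.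
Qed.

Definition has_dir_derive (H H' : R -> R -> R) (w1 w2 : R) : Prop :=
  forall s1 s2 t, is_derive (fun t => H (s1 + t * w1) (s2 + t * w2)) t
                            (H' (s1 + t * w1) (s2 + t * w2)).

Lemma segment_int_dir_derive H H' w1 w2 u1 u2 :
  continuous2 H -> continuous2 H' -> has_dir_derive H H' u1 u2 ->
  has_dir_derive (segment_int H w1 w2) (segment_int H' w1 w2) u1 u2.
Proof.
  intros HH HH' HD s1 s2 t0.
  set (f := fun u c => H (s1 + u * u1 + c * w1) (s2 + u * u2 + c * w2)).
  assert (Hf : forall u c, is_derive (fun u => f u c) u
                              (H' (s1 + u * u1 + c * w1) (s2 + u * u2 + c * w2))).
  { intros u c. generalize (HD (s1 + c * w1) (s2 + c * w2) u).
    replace (s1 + c * w1 + u * u1) with (s1 + u * u1 + c * w1) by ring.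
    replace (s2 + c * w2 + u * u2) with (s2 + u * u2 + c * w2) by ring.
    apply is_derive_ext. intros z. unfold f. f_equal; ring. }
  unfold segment_int.
  replace (RInt (fun t => H' (s1 + t0 * u1 + t * w1) (s2 + t0 * u2 + t * w2)) 0 1)
    with (RInt (fun c => Derive (fun u => f u c) t0) 0 1)
    by (apply RInt_ext; intros; apply is_derive_unique, Hf).
  apply (is_derive_RInt_param f 0 1 t0).
  - apply filter_forall. intros x t _. eexists. apply Hf.
  - intros t _. apply continuity_2d_pt_ext with
      (fun u v => H' (s1 + u * u1 + v * w1) (s2 + u * u2 + v * w2)).
    { intros; symmetry; apply is_derive_unique, Hf. }
    apply continuous2_continuity_2d_pt, continuous2_affine; auto.
  - apply filter_forall. intros y. unfold f.
    apply (ex_RInt_along_line H (s1 + y * u1) (s2 + y * u2)); auto.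
Qed.

Lemma segment_int_dir_deriv_ftc H H' w1 w2 s1 s2 :
  continuous2 H' -> has_dir_derive H H' w1 w2 ->
  segment_int H' w1 w2 s1 s2 = H (s1 + w1) (s2 + w2) - H s1 s2.
Proof.
  intros HH' HD. unfold segment_int.
  set (g := fun t => H (s1 + t * w1) (s2 + t * w2)).
  assert (Eg : forall t, Derive g t = H' (s1 + t * w1) (s2 + t * w2))
    by (intros; apply is_derive_unique, HD).
  rewrite <- (RInt_ext (Derive g)) by (intros; apply Eg).
  rewrite RInt_Derive.
  - unfold g. f_equal; f_equal; ring.
  - intros; eexists; apply HD.
  - intros. apply (continuous_ext (fun t => H' (s1 + t * w1) (s2 + t * w2))).
    + intros; symmetry; apply Eg.
    + apply continuous_along_line; auto.
Qed.

Definition periodic_along (H : R -> R -> R) (a b : R) : Prop :=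
  forall u v, H (u + a) (v + b) = H u v.

Lemma segment_int_periodic H w1 w2 a b :
  periodic_along H a b -> periodic_along (segment_int H w1 w2) a b.
Proof.
  intros Hp s1 s2. unfold segment_int. apply RInt_ext. intros.
  rewrite <- (Hp (s1 + x * w1) (s2 + x * w2)). f_equal; ring.
Qed.

Lemma segment_int_zero w1 w2 : segment_int (fun _ _ => 0) w1 w2 = (fun _ _ => 0).
Proof.
  do 2 (apply functional_extensionality; intro).
  unfold segment_int. rewrite RInt_const. compute; ring.
Qed.

Lemma segment_int_plus f g w1 w2 : continuous2 f -> continuous2 g ->
  segment_int (fun u v => f u v + g u v) w1 w2 =
  (fun s1 s2 => segment_int f w1 w2 s1 s2 + segment_int g w1 w2 s1 s2).
Proof.
  intros. do 2 (apply functional_extensionality; intro).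
  apply (RInt_plus (V := R_CompleteNormedModule)); apply ex_RInt_along_line; auto.
Qed.

Lemma segment_int_scal a f w1 w2 : continuous2 f ->
  segment_int (fun u v => a * f u v) w1 w2 = (fun s1 s2 => a * segment_int f w1 w2 s1 s2).
Proof.
  intros. do 2 (apply functional_extensionality; intro).
  apply (RInt_scal (V := R_CompleteNormedModule)); apply ex_RInt_along_line; auto.
Qed.

(** * Continuously differentiable functions of two variables *)

Definition C1_2 (H : R -> R -> R) : Prop :=
  continuous2 H /\ (forall x y, differentiable_pt_lim H x y (D1 H x y) (D2 H x y)) /\
  continuous2 (D1 H) /\ continuous2 (D2 H).

Lemma C1_2_continuous H : C1_2 H -> continuous2 H.
Proof. intros [? _]; auto. Qed.

Lemma C1_2_differentiable H x y : C1_2 H -> differentiable_pt_lim H x y (D1 H x y) (D2 H x y).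
Proof. intros [_ [Hd _]]; auto. Qed.

Lemma C1_2_D1_continuous H : C1_2 H -> continuous2 (D1 H).
Proof. intros [_ [_ [? _]]]; auto. Qed.

Lemma C1_2_D2_continuous H : C1_2 H -> continuous2 (D2 H).
Proof. intros [_ [_ [_ ?]]]; auto. Qed.

Lemma D1_differentiable H x y lx ly : differentiable_pt_lim H x y lx ly -> D1 H x y = lx.
Proof. intros Hd. apply (differentiable_pt_lim_unique H x y lx ly Hd). Qed.

Lemma D2_differentiable H x y lx ly : differentiable_pt_lim H x y lx ly -> D2 H x y = ly.
Proof. intros Hd. apply (differentiable_pt_lim_unique H x y lx ly Hd). Qed.

Lemma C1_2_intro H h1 h2 : continuous2 H -> continuous2 h1 -> continuous2 h2 ->
  (forall x y, differentiable_pt_lim H x y (h1 x y) (h2 x y)) -> C1_2 H.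
Proof.
  intros C0 C1 C2 Hd. split; [auto | split; [| split]].
  - intros x y.
    rewrite (D1_differentiable _ _ _ _ _ (Hd x y)), (D2_differentiable _ _ _ _ _ (Hd x y)).
    auto.
  - apply continuous2_ext with h1; auto. intros; symmetry; eapply D1_differentiable; eauto.
  - apply continuous2_ext with h2; auto. intros; symmetry; eapply D2_differentiable; eauto.
Qed.

Lemma C1_2_ext f g : (forall u v, f u v = g u v) -> C1_2 f -> C1_2 g.
Proof.
  intros E H. replace g with f; auto.
  do 2 (apply functional_extensionality; intro); auto.
Qed.

Lemma C1_2_comp k f g : C1_2 k -> C1_2 f -> C1_2 g -> C1_2 (fun u v => k (f u v) (g u v)).
Proof.
  intros Hk Hf Hg.
  apply C1_2_intro with
    (fun x y => D1 k (f x y) (g x y) * D1 f x y + D2 k (f x y) (g x y) * D1 g x y)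
    (fun x y => D1 k (f x y) (g x y) * D2 f x y + D2 k (f x y) (g x y) * D2 g x y).
  - apply continuous2_comp2; apply C1_2_continuous; auto.
  - apply continuous2_plus; apply continuous2_mult;
      auto using continuous2_comp2, C1_2_continuous, C1_2_D1_continuous, C1_2_D2_continuous.
  - apply continuous2_plus; apply continuous2_mult;
      auto using continuous2_comp2, C1_2_continuous, C1_2_D1_continuous, C1_2_D2_continuous.
  - intros x y. apply differentiable_pt_lim_comp; apply C1_2_differentiable; auto.
Qed.

Lemma differentiable_pt_lim_affine a b c x y :
  differentiable_pt_lim (fun u v => a + u * b + v * c) x y b c.
Proof.
  intros eps. exists eps. intros u v _ _.
  replace (a + u * b + v * c - (a + x * b + y * c) - (b * (u - x) + c * (v - y))) with 0 by ring.
  rewrite Rabs_R0. apply Rmult_le_pos; [apply Rlt_le, cond_pos |].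
  apply Rle_trans with (Rabs (u - x)); [apply Rabs_pos | apply Rmax_l].
Qed.

Lemma differentiable_pt_lim_mult x y : differentiable_pt_lim (fun a b => a * b) x y y x.
Proof.
  intros eps. exists eps. intros u v Hu Hv.
  replace (u * v - x * y - (y * (u - x) + x * (v - y))) with ((u - x) * (v - y)) by ring.
  rewrite Rabs_mult. apply Rmult_le_compat; try apply Rabs_pos; [lra | apply Rmax_r].
Qed.

Lemma C1_2_affine a b c : C1_2 (fun u v => a + u * b + v * c).
Proof.
  apply C1_2_intro with (fun _ _ => b) (fun _ _ => c); try apply continuous2_const.
  - apply continuous2_plus; [apply continuous2_plus |]; auto using continuous2_const;
      apply continuous2_mult; auto using continuous2_const, continuous2_fst, continuous2_snd.
  - intros; apply differentiable_pt_lim_affine.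
Qed.

Lemma C1_2_const a : C1_2 (fun _ _ => a).
Proof. apply (C1_2_ext (fun u v => a + u * 0 + v * 0)); [intros; ring | apply C1_2_affine]. Qed.

Lemma C1_2_plus f g : C1_2 f -> C1_2 g -> C1_2 (fun u v => f u v + g u v).
Proof.
  intros Hf Hg.
  apply (C1_2_ext (fun u v => 0 + f u v * 1 + g u v * 1)); [intros; ring |].
  apply (C1_2_comp (fun a b => 0 + a * 1 + b * 1)); auto using C1_2_affine.
Qed.

Lemma C1_2_mult f g : C1_2 f -> C1_2 g -> C1_2 (fun u v => f u v * g u v).
Proof.
  intros Hf Hg. apply (C1_2_comp (fun a b => a * b)); auto.
  apply C1_2_intro with (fun _ y => y) (fun x _ => x);
    auto using continuous2_mult, continuous2_fst, continuous2_snd, differentiable_pt_lim_mult.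
Qed.

Lemma C1_2_scal a f : C1_2 f -> C1_2 (fun u v => a * f u v).
Proof. intros; apply C1_2_mult; auto using C1_2_const. Qed.

Lemma differentiable_pt_lim_prod f g x y : C1_2 f -> C1_2 g ->
  differentiable_pt_lim (fun u v => f u v * g u v) x y
    (D1 f x y * g x y + f x y * D1 g x y) (D2 f x y * g x y + f x y * D2 g x y).
Proof.
  intros Hf Hg.
  replace (D1 f x y * g x y + f x y * D1 g x y) with (g x y * D1 f x y + f x y * D1 g x y) by ring.
  replace (D2 f x y * g x y + f x y * D2 g x y) with (g x y * D2 f x y + f x y * D2 g x y) by ring.
  apply (differentiable_pt_lim_comp (fun a b => a * b));
    auto using differentiable_pt_lim_mult, C1_2_differentiable.
Qed.

Lemma D1_mult f g u v : C1_2 f -> C1_2 g ->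
  D1 (fun u v => f u v * g u v) u v = D1 f u v * g u v + f u v * D1 g u v.
Proof. intros; eapply D1_differentiable, differentiable_pt_lim_prod; auto. Qed.

Lemma D2_mult f g u v : C1_2 f -> C1_2 g ->
  D2 (fun u v => f u v * g u v) u v = D2 f u v * g u v + f u v * D2 g u v.
Proof. intros; eapply D2_differentiable, differentiable_pt_lim_prod; auto. Qed.

Lemma C1_2_is_derive1 H u v : C1_2 H -> is_derive (fun t => H t v) u (D1 H u v).
Proof.
  intros HC. apply is_derive_Reals.
  replace (D1 H u v) with (D1 H u v * 1 + D2 H u v * 0) by ring.
  apply (derivable_pt_lim_comp_2d H (fun t => t) (fun _ => v)).
  - apply C1_2_differentiable; auto.
  - apply derivable_pt_lim_id.
  - apply derivable_pt_lim_const.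
Qed.

Lemma C1_2_is_derive2 H u v : C1_2 H -> is_derive (fun t => H u t) v (D2 H u v).
Proof.
  intros HC. apply is_derive_Reals.
  replace (D2 H u v) with (D1 H u v * 0 + D2 H u v * 1) by ring.
  apply (derivable_pt_lim_comp_2d H (fun _ => u) (fun t => t)).
  - apply C1_2_differentiable; auto.
  - apply derivable_pt_lim_const.
  - apply derivable_pt_lim_id.
Qed.

Lemma C1_2_ex_derive1 H u v : C1_2 H -> ex_derive (fun t => H t v) u.
Proof. intros; eexists; apply C1_2_is_derive1; auto. Qed.

Lemma C1_2_ex_derive2 H u v : C1_2 H -> ex_derive (fun t => H u t) v.
Proof. intros; eexists; apply C1_2_is_derive2; auto. Qed.

Lemma D1_plus f g u v : C1_2 f -> C1_2 g ->
  D1 (fun u v => f u v + g u v) u v = D1 f u v + D1 g u v.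
Proof. intros; apply Derive_plus; apply C1_2_ex_derive1; auto. Qed.

Lemma D2_plus f g u v : C1_2 f -> C1_2 g ->
  D2 (fun u v => f u v + g u v) u v = D2 f u v + D2 g u v.
Proof. intros; apply Derive_plus; apply C1_2_ex_derive2; auto. Qed.

Lemma D1_scal k f u v : D1 (fun u v => k * f u v) u v = k * D1 f u v.
Proof. apply Derive_scal. Qed.

Lemma D2_scal k f u v : D2 (fun u v => k * f u v) u v = k * D2 f u v.
Proof. apply Derive_scal. Qed.

Definition dir_deriv (H : R -> R -> R) (w1 w2 : R) : R -> R -> R :=
  fun u v => D1 H u v * w1 + D2 H u v * w2.

Lemma C1_2_has_dir_derive H w1 w2 : C1_2 H -> has_dir_derive H (dir_deriv H w1 w2) w1 w2.
Proof.
  intros HC s1 s2 t. apply is_derive_Reals.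
  apply (derivable_pt_lim_comp_2d H (fun t => s1 + t * w1) (fun t => s2 + t * w2));
    [apply C1_2_differentiable; auto | |]; apply is_derive_Reals; auto_derive; auto; ring.
Qed.

Lemma continuous2_dir_deriv H w1 w2 : C1_2 H -> continuous2 (dir_deriv H w1 w2).
Proof.
  intros HC. apply continuous2_plus; apply continuous2_mult;
    auto using continuous2_const, C1_2_D1_continuous, C1_2_D2_continuous.
Qed.

(** * Integrals over a period cell *)

Definition cell_int (k : R -> R -> R) (a b : nat -> R) : R :=
  segment_int (segment_int (segment_int k (a 2%nat) (b 2%nat)) (a 1%nat) (b 1%nat))
    (a 0%nat) (b 0%nat) 0 0.

Lemma torus_int_cell_int k a b :
  torus_int (fun x => k (dot3 x a) (dot3 x b)) = cell_int k a b.
Proof.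
  unfold torus_int, cell_int, segment_int.
  apply RInt_ext; intros ? _. apply RInt_ext; intros ? _. apply RInt_ext; intros ? _.
  unfold dot3, sum3, vec3. f_equal; ring.
Qed.

Lemma cell_int_ext f g a b : (forall u v, f u v = g u v) -> cell_int f a b = cell_int g a b.
Proof.
  intros E. replace f with g; auto.
  do 2 (apply functional_extensionality; intro); auto.
Qed.

Lemma cell_int_plus f g a b : continuous2 f -> continuous2 g ->
  cell_int (fun u v => f u v + g u v) a b = cell_int f a b + cell_int g a b.
Proof.
  intros Hf Hg. unfold cell_int.
  rewrite segment_int_plus, segment_int_plus, segment_int_plus;
    auto using segment_int_continuous.
Qed.

Lemma cell_int_scal c f a b : continuous2 f ->
  cell_int (fun u v => c * f u v) a b = c * cell_int f a b.
Proof.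
  intros Hf. unfold cell_int.
  rewrite segment_int_scal, segment_int_scal, segment_int_scal;
    auto using segment_int_continuous.
Qed.

Lemma cell_int_minus f g a b : continuous2 f -> continuous2 g ->
  cell_int (fun u v => f u v - g u v) a b = cell_int f a b - cell_int g a b.
Proof.
  intros Hf Hg.
  rewrite (cell_int_ext _ (fun u v => f u v + (-1) * g u v)) by (intros; ring).
  rewrite cell_int_plus, cell_int_scal; auto using continuous2_scal. ring.
Qed.

Lemma cell_int_const0 a b : cell_int (fun _ _ => 0) a b = 0.
Proof. unfold cell_int. rewrite !segment_int_zero. reflexivity. Qed.

Section CellIntDerivative.
Variables (H : R -> R -> R) (a b : nat -> R).
Hypothesis H_C1 : C1_2 H.
Hypothesis H_periodic : forall m, (m < 3)%nat -> periodic_along H (a m) (b m).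

(* Integrating first along the period of the derivative, the inner integral is a
   difference of values one period apart. *)
Lemma cell_int_dir_deriv2 : cell_int (dir_deriv H (a 2%nat) (b 2%nat)) a b = 0.
Proof.
  unfold cell_int.
  replace (segment_int (dir_deriv H (a 2%nat) (b 2%nat)) (a 2%nat) (b 2%nat))
    with (fun _ _ : R => 0).
  { rewrite !segment_int_zero. reflexivity. }
  do 2 (apply functional_extensionality; intro).
  rewrite (segment_int_dir_deriv_ftc H), H_periodic by
    auto using continuous2_dir_deriv, C1_2_has_dir_derive.
  ring.
Qed.

Lemma cell_int_dir_deriv1 : cell_int (dir_deriv H (a 1%nat) (b 1%nat)) a b = 0.
Proof.
  unfold cell_int.
  replace (segment_int (segment_int (dir_deriv H (a 1%nat) (b 1%nat)) (a 2%nat) (b 2%nat))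
             (a 1%nat) (b 1%nat)) with (fun _ _ : R => 0).
  { rewrite !segment_int_zero. reflexivity. }
  do 2 (apply functional_extensionality; intro).
  rewrite (segment_int_dir_deriv_ftc (segment_int H (a 2%nat) (b 2%nat))).
  - rewrite segment_int_periodic by auto. ring.
  - apply segment_int_continuous, continuous2_dir_deriv; auto.
  - apply segment_int_dir_derive;
      auto using C1_2_continuous, continuous2_dir_deriv, C1_2_has_dir_derive.
Qed.

Lemma cell_int_dir_deriv0 : cell_int (dir_deriv H (a 0%nat) (b 0%nat)) a b = 0.
Proof.
  unfold cell_int.
  rewrite (segment_int_dir_deriv_ftc
             (segment_int (segment_int H (a 2%nat) (b 2%nat)) (a 1%nat) (b 1%nat))).
  - rewrite !Rplus_0_l, <- (Rplus_0_l (a 0%nat)), <- (Rplus_0_l (b 0%nat)).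
    rewrite segment_int_periodic; [ring |].
    apply segment_int_periodic; auto.
  - apply segment_int_continuous, segment_int_continuous, continuous2_dir_deriv; auto.
  - apply segment_int_dir_derive;
      auto using segment_int_continuous, C1_2_continuous, continuous2_dir_deriv.
    apply segment_int_dir_derive;
      auto using C1_2_continuous, continuous2_dir_deriv, C1_2_has_dir_derive.
Qed.

Lemma cell_int_dir_deriv_comb (lam : nat -> R) :
  cell_int (dir_deriv H (dot3 lam a) (dot3 lam b)) a b = 0.
Proof.
  assert (Hcont := fun m => continuous2_dir_deriv H (a m) (b m) H_C1).
  rewrite (cell_int_ext _ (fun u v =>
      lam 0%nat * dir_deriv H (a 0%nat) (b 0%nat) u v
      + (lam 1%nat * dir_deriv H (a 1%nat) (b 1%nat) u v
         + lam 2%nat * dir_deriv H (a 2%nat) (b 2%nat) u v)))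
    by (intros; unfold dir_deriv, dot3, sum3; ring).
  rewrite cell_int_plus, cell_int_scal, cell_int_plus, !cell_int_scal,
    cell_int_dir_deriv0, cell_int_dir_deriv1, cell_int_dir_deriv2;
    auto using continuous2_plus, continuous2_scal.
  ring.
Qed.

Lemma cell_int_D1 : dot3 a a = 1 -> dot3 a b = 0 -> cell_int (D1 H) a b = 0.
Proof.
  intros Haa Hab. rewrite <- (cell_int_dir_deriv_comb a), Haa, Hab.
  apply cell_int_ext. intros; unfold dir_deriv; ring.
Qed.

Lemma cell_int_D2 : dot3 b b = 1 -> dot3 a b = 0 -> cell_int (D2 H) a b = 0.
Proof.
  intros Hbb Hab. rewrite <- (cell_int_dir_deriv_comb b), Hbb.
  replace (dot3 b a) with 0 by (rewrite <- Hab; unfold dot3, sum3; ring).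
  apply cell_int_ext. intros; unfold dir_deriv; ring.
Qed.
End CellIntDerivative.

Section Parts.
Variables (f g : R -> R -> R) (a b : nat -> R).
Hypotheses (f_C1 : C1_2 f) (g_C1 : C1_2 g).
Hypothesis fg_periodic :
  forall m, (m < 3)%nat -> periodic_along f (a m) (b m) /\ periodic_along g (a m) (b m).

Let fg_C1 : C1_2 (fun u v => f u v * g u v) := C1_2_mult f g f_C1 g_C1.

Let fg_periodic_along m : (m < 3)%nat -> periodic_along (fun u v => f u v * g u v) (a m) (b m).
Proof. intros Hm u v. destruct (fg_periodic m Hm) as [Pf Pg]. rewrite Pf, Pg. auto. Qed.

Lemma cell_int_parts1 : dot3 a a = 1 -> dot3 a b = 0 ->
  cell_int (fun u v => f u v * D1 g u v) a b = - cell_int (fun u v => D1 f u v * g u v) a b.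
Proof.
  intros Haa Hab.
  assert (H0 := cell_int_D1 _ a b fg_C1 fg_periodic_along Haa Hab).
  rewrite (cell_int_ext _ (fun u v => D1 f u v * g u v + f u v * D1 g u v)) in H0
    by (intros; apply D1_mult; auto).
  rewrite cell_int_plus in H0 by
    (apply continuous2_mult; auto using C1_2_continuous, C1_2_D1_continuous).
  lra.
Qed.

Lemma cell_int_parts2 : dot3 b b = 1 -> dot3 a b = 0 ->
  cell_int (fun u v => f u v * D2 g u v) a b = - cell_int (fun u v => D2 f u v * g u v) a b.
Proof.
  intros Hbb Hab.
  assert (H0 := cell_int_D2 _ a b fg_C1 fg_periodic_along Hbb Hab).
  rewrite (cell_int_ext _ (fun u v => D2 f u v * g u v + f u v * D2 g u v)) in H0
    by (intros; apply D2_mult; auto).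
  rewrite cell_int_plus in H0 by
    (apply continuous2_mult; auto using C1_2_continuous, C1_2_D2_continuous).
  lra.
Qed.
End Parts.

Lemma cell_int_quadratic f g p1 p2 q1 q2 a b : continuous2 f -> continuous2 g ->
  cell_int (fun u v => (f u v * p1 + g u v * p2) * (f u v * q1 + g u v * q2)) a b =
  p1 * q1 * cell_int (fun u v => f u v * f u v) a b
  + (p1 * q2 + p2 * q1) * cell_int (fun u v => f u v * g u v) a b
  + p2 * q2 * cell_int (fun u v => g u v * g u v) a b.
Proof.
  intros Hf Hg.
  assert (Hff : continuous2 (fun u v => f u v * f u v)) by (apply continuous2_mult; auto).
  assert (Hfg : continuous2 (fun u v => f u v * g u v)) by (apply continuous2_mult; auto).
  assert (Hgg : continuous2 (fun u v => g u v * g u v)) by (apply continuous2_mult; auto).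
  rewrite (cell_int_ext _ (fun u v => p1 * q1 * (f u v * f u v)
             + ((p1 * q2 + p2 * q1) * (f u v * g u v) + p2 * q2 * (g u v * g u v))))
    by (intros; ring).
  rewrite cell_int_plus, cell_int_scal, cell_int_plus, !cell_int_scal;
    auto using continuous2_plus, continuous2_scal.
  ring.
Qed.

(** * Smoothness, locality and periodicity *)

Lemma iterD_app s b g : iterD (s ++ b :: nil) g = iterD s ((if b then D1 else D2) g).
Proof. induction s as [| ? ? IH]; simpl; auto. rewrite IH; auto. Qed.

Lemma smooth2_D1 g : smooth2 g -> smooth2 (D1 g).
Proof. intros H s x y. generalize (H (s ++ true :: nil) x y). rewrite iterD_app. auto. Qed.

Lemma smooth2_D2 g : smooth2 g -> smooth2 (D2 g).
Proof. intros H s x y. generalize (H (s ++ false :: nil) x y). rewrite iterD_app. auto. Qed.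

Lemma smooth2_continuous g : smooth2 g -> continuous2 g.
Proof. intros H x y. apply (H nil x y). Qed.

Lemma smooth2_C1_2 g : smooth2 g -> C1_2 g.
Proof.
  intros H. split; [| split; [| split]].
  - apply smooth2_continuous; auto.
  - intros x y. apply filterdiff_differentiable_pt_lim.
    eapply filterdiff_ext_lin.
    + apply (is_derive_filterdiff g x y (D1 g) (D2 g x y)).
      * apply filter_forall. intros [u v]. apply Derive_correct, (H nil u v).
      * apply Derive_correct, (H nil x y).
      * apply smooth2_continuous, smooth2_D1; auto.
    + intros [u v]. reflexivity.
  - apply smooth2_continuous, smooth2_D1; auto.
  - apply smooth2_continuous, smooth2_D2; auto.
Qed.

Lemma smooth2_D1_D2 g x y : smooth2 g -> D1 (D2 g) x y = D2 (D1 g) x y.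
Proof.
  intros Hg. apply Schwarz.
  - exists (mkposreal 1 Rlt_0_1). intros u v _ _.
    repeat split;
      [apply (Hg nil u v) .. | apply (Hg (false :: nil) u v) | apply (Hg (true :: nil) u v)].
  - apply continuous2_continuity_2d_pt, smooth2_continuous, smooth2_D1, smooth2_D2; auto.
  - apply continuous2_continuity_2d_pt, smooth2_continuous, smooth2_D2, smooth2_D1; auto.
Qed.

Definition in_square (p1 p2 d u1 u2 : R) : Prop := Rabs (u1 - p1) < d /\ Rabs (u2 - p2) < d.

Lemma in_square_center p1 p2 d : 0 < d -> in_square p1 p2 d p1 p2.
Proof. intros; unfold in_square; rewrite !Rminus_diag, Rabs_R0; auto. Qed.

Lemma in_square_trans p1 p2 d w1 w2 u1 u2 :
  in_square p1 p2 (d / 2) w1 w2 -> in_square w1 w2 (d / 2) u1 u2 -> in_square p1 p2 d u1 u2.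
Proof.
  intros [H1 H2] [H3 H4]. split.
  - replace (u1 - p1) with ((u1 - w1) + (w1 - p1)) by ring.
    eapply Rle_lt_trans; [apply Rabs_triang | lra].
  - replace (u2 - p2) with ((u2 - w2) + (w2 - p2)) by ring.
    eapply Rle_lt_trans; [apply Rabs_triang | lra].
Qed.

Lemma locally_2d_in_square (P : R -> R -> Prop) p1 p2 d : 0 < d ->
  (forall u v, in_square p1 p2 d u v -> P u v) -> locally_2d P p1 p2.
Proof. intros Hd H. exists (mkposreal d Hd). intros u v Hu Hv. apply H; split; auto. Qed.

Lemma D1_local f g p1 p2 d : 0 < d ->
  (forall u v, in_square p1 p2 d u v -> f u v = g u v) -> D1 f p1 p2 = D1 g p1 p2.
Proof.
  intros Hd E. unfold D1. apply Derive_ext_loc. exists (mkposreal d Hd). intros y Hy.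
  apply E. split; [apply Hy | rewrite Rminus_diag, Rabs_R0; auto].
Qed.

Lemma D2_local f g p1 p2 d : 0 < d ->
  (forall u v, in_square p1 p2 d u v -> f u v = g u v) -> D2 f p1 p2 = D2 g p1 p2.
Proof.
  intros Hd E. unfold D2. apply Derive_ext_loc. exists (mkposreal d Hd). intros y Hy.
  apply E. split; [rewrite Rminus_diag, Rabs_R0; auto | apply Hy].
Qed.

Lemma D1_const a p1 p2 : D1 (fun _ _ => a) p1 p2 = 0.
Proof. unfold D1, D2. apply Derive_const. Qed.

Lemma D2_const a p1 p2 : D2 (fun _ _ => a) p1 p2 = 0.
Proof. unfold D1, D2. apply Derive_const. Qed.

Lemma C1_2_local H :
  (forall p1 p2, exists g d, 0 < d /\ C1_2 g /\
     forall u v, in_square p1 p2 d u v -> H u v = g u v) ->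
  C1_2 H.
Proof.
  intros HL.
  assert (Hloc : forall p1 p2, exists g d, 0 < d /\ C1_2 g /\ forall u v, in_square p1 p2 d u v ->
     H u v = g u v /\ D1 H u v = D1 g u v /\ D2 H u v = D2 g u v).
  { intros p1 p2. destruct (HL p1 p2) as [g [d [Hd [Hg E]]]].
    exists g, (d / 2). split; [lra | split; auto]. intros u v Huv.
    assert (E' : forall w1 w2, in_square u v (d / 2) w1 w2 -> H w1 w2 = g w1 w2)
      by (intros; apply E; eapply in_square_trans; eauto).
    split; [| split].
    - apply E'. apply in_square_center; lra.
    - apply (D1_local _ _ _ _ (d / 2)); auto; lra.
    - apply (D2_local _ _ _ _ (d / 2)); auto; lra. }
  split; [| split; [| split]]; intros p1 p2;
    destruct (Hloc p1 p2) as [g [d [Hd [Hg E]]]];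
    try apply continuity_2d_pt_filterlim.
  - apply continuity_2d_pt_ext_loc with g.
    + apply locally_2d_in_square with d; auto. intros; symmetry; apply E; auto.
    + apply continuous2_continuity_2d_pt, C1_2_continuous; auto.
  - destruct (E p1 p2 (in_square_center _ _ _ Hd)) as [_ [-> ->]].
    apply differentiable_pt_lim_ext with g.
    + apply locally_2d_in_square with d; auto. intros; symmetry; apply E; auto.
    + apply C1_2_differentiable; auto.
  - apply continuity_2d_pt_ext_loc with (D1 g).
    + apply locally_2d_in_square with d; auto. intros; symmetry; apply E; auto.
    + apply continuous2_continuity_2d_pt, C1_2_D1_continuous; auto.
  - apply continuity_2d_pt_ext_loc with (D2 g).
    + apply locally_2d_in_square with d; auto. intros; symmetry; apply E; auto.
    + apply continuous2_continuity_2d_pt, C1_2_D2_continuous; auto.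
Qed.

Lemma Derive_shift f a u : Derive (fun t => f (t - a)) (u + a) = Derive f u.
Proof.
  unfold Derive. f_equal. apply Lim_ext. intros h.
  replace (u + a + h - a) with (u + h) by ring. replace (u + a - a) with u by ring. reflexivity.
Qed.

Lemma D1_periodic g a b : periodic_along g a b -> periodic_along (D1 g) a b.
Proof.
  intros Hp u v. unfold D1.
  rewrite (Derive_ext _ (fun t => g (t - a) v)); [apply (Derive_shift (fun t => g t v)) |].
  intros t. rewrite <- (Hp (t - a) v). f_equal; ring.
Qed.

Lemma D2_periodic g a b : periodic_along g a b -> periodic_along (D2 g) a b.
Proof.
  intros Hp u v. unfold D2.
  rewrite (Derive_ext _ (fun t => g u (t - b))); [apply (Derive_shift (fun t => g u t)) |].
  intros t. rewrite <- (Hp u (t - b)). f_equal; ring.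
Qed.

(** * Orthonormal frames of R^3 and the chain rule *)

Lemma sum3_ext f g : (forall m, (m < 3)%nat -> f m = g m) -> sum3 f = sum3 g.
Proof. intros E. unfold sum3. rewrite !E by lia. reflexivity. Qed.

Lemma dot3_comm v w : dot3 v w = dot3 w v.
Proof. unfold dot3, sum3; ring. Qed.

Lemma dot3_upd x m t v : (m < 3)%nat -> dot3 (upd x m t) v = dot3 x v + (t - x m) * v m.
Proof. intros Hm. unfold dot3, sum3, upd. destruct m as [| [| [| m]]]; simpl; try ring; lia. Qed.

Lemma partial_comp F a b m x : (m < 3)%nat -> C1_2 F ->
  partial m (fun x => F (dot3 x a) (dot3 x b)) x = dir_deriv F (a m) (b m) (dot3 x a) (dot3 x b).
Proof.
  intros Hm HF. unfold partial.
  rewrite (Derive_ext _ (fun t => F (dot3 x a + (t - x m) * a m) (dot3 x b + (t - x m) * b m)))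
    by (intros; rewrite !dot3_upd; auto).
  apply is_derive_unique, is_derive_Reals.
  set (y1 := dot3 x a). set (y2 := dot3 x b).
  assert (E1 : y1 = y1 + (x m - x m) * a m) by ring.
  assert (E2 : y2 = y2 + (x m - x m) * b m) by ring.
  apply (derivable_pt_lim_comp_2d F (fun t => y1 + (t - x m) * a m)
                                    (fun t => y2 + (t - x m) * b m)).
  - rewrite <- E1, <- E2. apply C1_2_differentiable; auto.
  - apply is_derive_Reals. auto_derive; auto; ring.
  - apply is_derive_Reals. auto_derive; auto; ring.
Qed.

Lemma partial_mult_const m F c : partial m (fun x => F x * c) = fun x => partial m F x * c.
Proof. apply functional_extensionality; intro x. apply Derive_scal_l. Qed.

Definition cross3 (a b : nat -> R) : nat -> R :=
  vec3 (a 1%nat * b 2%nat - a 2%nat * b 1%nat) (a 2%nat * b 0%nat - a 0%nat * b 2%nat)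
       (a 0%nat * b 1%nat - a 1%nat * b 0%nat).

Lemma dot3_cross3_sq r a b :
  (dot3 r (cross3 a b)) ^ 2 = dot3 r r * dot3 a a * dot3 b b - dot3 r r * (dot3 a b) ^ 2
    - (dot3 r a) ^ 2 * dot3 b b - (dot3 r b) ^ 2 * dot3 a a + 2 * dot3 r a * dot3 r b * dot3 a b.
Proof. unfold dot3, sum3, cross3, vec3. ring. Qed.

Lemma dot3_self_eq0 v i : dot3 v v = 0 -> (i < 3)%nat -> v i = 0.
Proof.
  unfold dot3, sum3. intros H Hi.
  assert (H0 := Rle_0_sqr (v 0%nat)). assert (H1 := Rle_0_sqr (v 1%nat)).
  assert (H2 := Rle_0_sqr (v 2%nat)). unfold Rsqr in *.
  destruct i as [| [| [| i]]]; try lia; nra.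
Qed.

(* The third vector of an orthonormal frame is [+/- cross3 a b]; Parseval then follows
   from the Gram identity above. *)
Lemma orthonormal3_parseval a b c r : orthonormal3 a b c ->
  dot3 r r = (dot3 r a) ^ 2 + (dot3 r b) ^ 2 + (dot3 r c) ^ 2.
Proof.
  intros [Haa [Hbb [Hcc [Hab [Hac Hbc]]]]].
  set (n := cross3 a b).
  assert (Hn : forall r, (dot3 r n) ^ 2 = dot3 r r - (dot3 r a) ^ 2 - (dot3 r b) ^ 2)
    by (intros; unfold n; rewrite dot3_cross3_sq, Haa, Hbb, Hab; ring).
  assert (Hnn : dot3 n n = 1).
  { transitivity (dot3 a a * dot3 b b - (dot3 a b) ^ 2);
      [unfold n, dot3, sum3, cross3, vec3; ring | rewrite Haa, Hbb, Hab; ring]. }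
  set (s := dot3 c n).
  assert (Hs : s ^ 2 = 1)
    by (unfold s; rewrite Hn, Hcc, (dot3_comm c a), (dot3_comm c b), Hac, Hbc; ring).
  assert (Hc : forall i, (i < 3)%nat -> c i = s * n i).
  { intros i Hi. apply Rminus_diag_uniq.
    apply (dot3_self_eq0 (fun i => c i - s * n i)); auto.
    transitivity (dot3 c c - 2 * s * dot3 c n + s ^ 2 * dot3 n n);
      [unfold dot3, sum3; ring | rewrite Hcc, Hnn, Hs; fold s; nra]. }
  replace (dot3 r c) with (s * dot3 r n)
    by (unfold dot3, sum3; rewrite (Hc 0%nat), (Hc 1%nat), (Hc 2%nat) by lia; ring).
  replace ((s * dot3 r n) ^ 2) with (s ^ 2 * (dot3 r n) ^ 2) by ring.
  rewrite Hs, Hn. ring.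
Qed.

Lemma orthonormal3_columns a b c k l : orthonormal3 a b c -> (k < 3)%nat -> (l < 3)%nat ->
  a k * a l + b k * b l + c k * c l = delta k l.
Proof.
  intros Ho Hk Hl.
  assert (Hdiag : forall i, (i < 3)%nat -> a i * a i + b i * b i + c i * c i = 1).
  { intros i Hi.
    generalize (orthonormal3_parseval a b c (vec3 (delta i 0) (delta i 1) (delta i 2)) Ho).
    unfold dot3, sum3, vec3, delta. destruct i as [| [| [| i]]]; simpl; try lia; intros; nra. }
  unfold delta. destruct (Nat.eqb_spec k l) as [-> | Hkl]; [apply Hdiag; auto |].
  generalize (orthonormal3_parseval a b c
     (vec3 (delta k 0 + delta l 0) (delta k 1 + delta l 1) (delta k 2 + delta l 2)) Ho).
  generalize (Hdiag k Hk) (Hdiag l Hl).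
  unfold dot3, sum3, vec3, delta.
  destruct k as [| [| [| k]]]; destruct l as [| [| [| l]]]; simpl; try lia; intros; nra.
Qed.

Lemma periodic3_periodic_along (phi : R -> R -> R) xi xi1 xi2 : orthonormal3 xi xi1 xi2 ->
  periodic3 (fun x => phi (dot3 x xi1) (dot3 x xi2)) ->
  forall m, (m < 3)%nat -> periodic_along phi (xi1 m) (xi2 m).
Proof.
  intros [_ [H11 [H22 [_ [_ H12]]]]] Hp m Hm u v.
  set (x := fun i => u * xi1 i + v * xi2 i).
  assert (E1 : dot3 x xi1 = u).
  { transitivity (u * dot3 xi1 xi1 + v * dot3 xi1 xi2); [unfold x, dot3, sum3; ring |].
    rewrite H11, H12; ring. }
  assert (E2 : dot3 x xi2 = v).
  { transitivity (u * dot3 xi1 xi2 + v * dot3 xi2 xi2); [unfold x, dot3, sum3; ring |].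
    rewrite H22, H12; ring. }
  generalize (Hp x m Hm). simpl. rewrite !dot3_upd, E1, E2 by auto.
  replace (x m + 1 - x m) with 1 by ring. rewrite !Rmult_1_l. auto.
Qed.

Lemma C1_2_dir_deriv F w1 w2 : C1_2 (D1 F) -> C1_2 (D2 F) -> C1_2 (dir_deriv F w1 w2).
Proof.
  intros H1 H2. apply C1_2_plus;
    [apply (C1_2_ext (fun u v => w1 * D1 F u v)) | apply (C1_2_ext (fun u v => w2 * D2 F u v))];
    intros; try ring; apply C1_2_scal; auto.
Qed.

Lemma D1_dir_deriv F w1 w2 u v : C1_2 (D1 F) -> C1_2 (D2 F) ->
  D1 (dir_deriv F w1 w2) u v = D1 (D1 F) u v * w1 + D1 (D2 F) u v * w2.
Proof.
  intros H1 H2. unfold dir_deriv, D1 at 1.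
  rewrite Derive_plus, !Derive_scal_l; auto;
    apply ex_derive_mult; auto using ex_derive_const, C1_2_ex_derive1.
Qed.

Lemma D2_dir_deriv F w1 w2 u v : C1_2 (D1 F) -> C1_2 (D2 F) ->
  D2 (dir_deriv F w1 w2) u v = D2 (D1 F) u v * w1 + D2 (D2 F) u v * w2.
Proof.
  intros H1 H2. unfold dir_deriv, D2 at 1.
  rewrite Derive_plus, !Derive_scal_l; auto;
    apply ex_derive_mult; auto using ex_derive_const, C1_2_ex_derive2.
Qed.

Lemma partial2_comp F a b m x : (m < 3)%nat -> C1_2 F -> C1_2 (D1 F) -> C1_2 (D2 F) ->
  partial m (partial m (fun x => F (dot3 x a) (dot3 x b))) x =
  dir_deriv (dir_deriv F (a m) (b m)) (a m) (b m) (dot3 x a) (dot3 x b).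
Proof.
  intros Hm H0 H1 H2.
  rewrite (functional_extensionality (partial m (fun x => F (dot3 x a) (dot3 x b)))
             (fun x => dir_deriv F (a m) (b m) (dot3 x a) (dot3 x b)))
    by (intros; apply partial_comp; auto).
  apply partial_comp, C1_2_dir_deriv; auto.
Qed.

Section Frame.
Variables (a b : nat -> R).
Hypotheses (Haa : dot3 a a = 1) (Hbb : dot3 b b = 1) (Hab : dot3 a b = 0).

Lemma sum3_dir_deriv_sq F u v :
  sum3 (fun m => (dir_deriv F (a m) (b m) u v) ^ 2) = D1 F u v * D1 F u v + D2 F u v * D2 F u v.
Proof.
  transitivity (D1 F u v * D1 F u v * dot3 a a + 2 * D1 F u v * D2 F u v * dot3 a b
                + D2 F u v * D2 F u v * dot3 b b);
    [unfold dir_deriv, dot3, sum3; ring | rewrite Haa, Hbb, Hab; ring].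
Qed.

Lemma sum3_dir_deriv2 F u v : C1_2 (D1 F) -> C1_2 (D2 F) ->
  sum3 (fun m => dir_deriv (dir_deriv F (a m) (b m)) (a m) (b m) u v) =
  D1 (D1 F) u v + D2 (D2 F) u v.
Proof.
  intros H1 H2.
  assert (E : forall m, dir_deriv (dir_deriv F (a m) (b m)) (a m) (b m) u v =
    D1 (D1 F) u v * (a m * a m) + (D1 (D2 F) u v + D2 (D1 F) u v) * (a m * b m)
    + D2 (D2 F) u v * (b m * b m))
    by (intros; unfold dir_deriv at 1; rewrite D1_dir_deriv, D2_dir_deriv by auto; ring).
  unfold sum3 at 1. rewrite !E.
  transitivity (D1 (D1 F) u v * dot3 a a + (D1 (D2 F) u v + D2 (D1 F) u v) * dot3 a b
                + D2 (D2 F) u v * dot3 b b);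
    [unfold dot3, sum3; ring | rewrite Haa, Hbb, Hab; ring].
Qed.
End Frame.

(** * Plane geometry and angular derivatives *)

Definition dist2 (u1 u2 v1 v2 : R) : R := (u1 - v1) * (u1 - v1) + (u2 - v2) * (u2 - v2).

Lemma dist2_nonneg u1 u2 v1 v2 : 0 <= dist2 u1 u2 v1 v2.
Proof. unfold dist2. apply Rplus_le_le_0_compat; apply Rle_0_sqr. Qed.

Lemma dist2_comm u1 u2 v1 v2 : dist2 u1 u2 v1 v2 = dist2 v1 v2 u1 u2.
Proof. unfold dist2; ring. Qed.

Lemma dist2_eq0 u1 u2 v1 v2 : dist2 u1 u2 v1 v2 = 0 -> u1 = v1 /\ u2 = v2.
Proof.
  unfold dist2. intros H.
  assert (H1 := Rle_0_sqr (u1 - v1)). assert (H2 := Rle_0_sqr (u2 - v2)). unfold Rsqr in *.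
  split; apply Rminus_diag_uniq; nra.
Qed.

Lemma dist2_le_sum a1 a2 b1 b2 u1 u2 :
  dist2 a1 a2 b1 b2 <= 2 * dist2 u1 u2 a1 a2 + 2 * dist2 u1 u2 b1 b2.
Proof.
  generalize (Rle_0_sqr (2 * u1 - a1 - b1)) (Rle_0_sqr (2 * u2 - a2 - b2)).
  unfold Rsqr, dist2. intros; nra.
Qed.

Lemma sqrt_dist2_triangle a1 a2 b1 b2 c1 c2 :
  sqrt (dist2 a1 a2 c1 c2) <= sqrt (dist2 a1 a2 b1 b2) + sqrt (dist2 b1 b2 c1 c2).
Proof.
  set (S1 := sqrt (dist2 a1 a2 b1 b2)). set (S2 := sqrt (dist2 b1 b2 c1 c2)).
  assert (H1 : S1 * S1 = dist2 a1 a2 b1 b2) by apply sqrt_sqrt, dist2_nonneg.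
  assert (H2 : S2 * S2 = dist2 b1 b2 c1 c2) by apply sqrt_sqrt, dist2_nonneg.
  assert (P1 : 0 <= S1) by apply sqrt_pos. assert (P2 : 0 <= S2) by apply sqrt_pos.
  set (x1 := a1 - b1). set (x2 := a2 - b2). set (y1 := b1 - c1). set (y2 := b2 - c2).
  assert (Lagrange : (S1 * S2) * (S1 * S2)
     = (x1 * y1 + x2 * y2) * (x1 * y1 + x2 * y2) + (x1 * y2 - x2 * y1) * (x1 * y2 - x2 * y1))
    by (replace ((S1 * S2) * (S1 * S2)) with ((S1 * S1) * (S2 * S2)) by ring;
        rewrite H1, H2; unfold dist2, x1, x2, y1, y2; ring).
  assert (CS : x1 * y1 + x2 * y2 <= S1 * S2).
  { assert (0 <= S1 * S2) by (apply Rmult_le_pos; auto).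
    generalize (Rle_0_sqr (x1 * y2 - x2 * y1)). unfold Rsqr. intros.
    destruct (Rle_lt_dec (x1 * y1 + x2 * y2) 0); nra. }
  rewrite <- (sqrt_square (S1 + S2)) by lra.
  apply sqrt_le_1_alt.
  replace ((S1 + S2) * (S1 + S2)) with (S1 * S1 + S2 * S2 + 2 * (S1 * S2)) by ring.
  rewrite H1, H2. unfold dist2 in *. unfold x1, x2, y1, y2 in CS. nra.
Qed.

(* The sum of the three mutual squared distances is at most three times the sum
   of the squared distances to any fourth point. *)
Lemma no_three_separated_points_near r q1 q2 r1 r2 s1 s2 p1 p2 : 0 < r ->
  4 * r < dist2 q1 q2 r1 r2 -> 4 * r < dist2 q1 q2 s1 s2 -> 4 * r < dist2 r1 r2 s1 s2 ->
  dist2 q1 q2 p1 p2 < 121 / 100 * r -> dist2 r1 r2 p1 p2 < 121 / 100 * r ->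
  dist2 s1 s2 p1 p2 < 121 / 100 * r -> False.
Proof.
  intros Hr H1 H2 H3 H4 H5 H6.
  assert (E : dist2 q1 q2 r1 r2 + dist2 q1 q2 s1 s2 + dist2 r1 r2 s1 s2 =
     3 * (dist2 q1 q2 p1 p2 + dist2 r1 r2 p1 p2 + dist2 s1 s2 p1 p2) -
     dist2 (q1 + r1 + s1) (q2 + r2 + s2) (3 * p1) (3 * p2))
    by (unfold dist2; ring).
  generalize (dist2_nonneg (q1 + r1 + s1) (q2 + r2 + s2) (3 * p1) (3 * p2)). lra.
Qed.

Lemma cross_eq0_common_nonzero z1 z2 e1 e2 g1 g2 :
  z1 * g2 - z2 * g1 = 0 -> e1 * g2 - e2 * g1 = 0 -> ~ (g1 = 0 /\ g2 = 0) ->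
  z1 * e2 - z2 * e1 = 0.
Proof.
  intros H1 H2 Hg.
  assert (E1 : (z1 * e2 - z2 * e1) * g1 = 0).
  { transitivity (z1 * (e2 * g1) - e1 * (z2 * g1)); [ring |].
    replace (e2 * g1) with (e1 * g2) by lra. replace (z2 * g1) with (z1 * g2) by lra. ring. }
  assert (E2 : (z1 * e2 - z2 * e1) * g2 = 0).
  { transitivity (e2 * (z1 * g2) - z2 * (e1 * g2)); [ring |].
    replace (e1 * g2) with (e2 * g1) by lra. replace (z1 * g2) with (z2 * g1) by lra. ring. }
  apply Rmult_integral in E1. apply Rmult_integral in E2. tauto.
Qed.

Lemma in_square_dist2 p1 p2 d u1 u2 : 0 < d ->
  in_square p1 p2 (d / 2) u1 u2 -> dist2 u1 u2 p1 p2 < d * d.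
Proof.
  intros Hd [H1 H2]. unfold dist2.
  apply Rabs_lt_between in H1. apply Rabs_lt_between in H2. nra.
Qed.

Lemma continuous2_not_both_zero_near f g p1 p2 : continuous2 f -> continuous2 g ->
  ~ (f p1 p2 = 0 /\ g p1 p2 = 0) ->
  exists d, 0 < d /\ forall w1 w2, in_square p1 p2 d w1 w2 -> ~ (f w1 w2 = 0 /\ g w1 w2 = 0).
Proof.
  intros Hf Hg Hfg. destruct (Req_dec (f p1 p2) 0) as [F0 | F0].
  - assert (G0 : g p1 p2 <> 0) by tauto.
    destruct (continuity_2d_pt_neq_0 _ _ _ (continuous2_continuity_2d_pt _ _ _ Hg) G0) as [d Hd].
    exists d. split; [apply cond_pos |]. intros w1 w2 [H1 H2] [_ K]. apply (Hd w1 w2); auto.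
  - destruct (continuity_2d_pt_neq_0 _ _ _ (continuous2_continuity_2d_pt _ _ _ Hf) F0) as [d Hd].
    exists d. split; [apply cond_pos |]. intros w1 w2 [H1 H2] [K _]. apply (Hd w1 w2); auto.
Qed.

Definition angular_deriv (g : R -> R -> R) (a1 a2 : R) : R -> R -> R :=
  fun u v => (u - a1) * D2 g u v - (v - a2) * D1 g u v.

Lemma angular_deriv_mult f g a1 a2 u v : C1_2 f -> C1_2 g ->
  angular_deriv (fun u v => f u v * g u v) a1 a2 u v =
  angular_deriv f a1 a2 u v * g u v + f u v * angular_deriv g a1 a2 u v.
Proof. intros Hf Hg. unfold angular_deriv. rewrite D1_mult, D2_mult by auto. ring. Qed.

Lemma D1_angular_deriv g a1 a2 u v : C1_2 (D1 g) -> C1_2 (D2 g) ->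
  D1 (angular_deriv g a1 a2) u v = D2 g u v + (u - a1) * D1 (D2 g) u v - (v - a2) * D1 (D1 g) u v.
Proof.
  intros H1 H2. unfold D1 at 1, angular_deriv. apply is_derive_unique.
  auto_derive.
  - repeat split; [apply (C1_2_ex_derive1 (D2 g)) | apply (C1_2_ex_derive1 (D1 g))]; auto.
  - unfold D1; ring.
Qed.

Lemma D2_angular_deriv g a1 a2 u v : C1_2 (D1 g) -> C1_2 (D2 g) ->
  D2 (angular_deriv g a1 a2) u v = (u - a1) * D2 (D2 g) u v - D1 g u v - (v - a2) * D2 (D1 g) u v.
Proof.
  intros H1 H2. unfold D2 at 1, angular_deriv. apply is_derive_unique.
  auto_derive.
  - repeat split; [apply (C1_2_ex_derive2 (D2 g)) | apply (C1_2_ex_derive2 (D1 g))]; auto.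
  - unfold D2; ring.
Qed.

Lemma angular_deriv_plus f g a1 a2 u v : C1_2 f -> C1_2 g ->
  angular_deriv (fun u v => f u v + g u v) a1 a2 u v =
  angular_deriv f a1 a2 u v + angular_deriv g a1 a2 u v.
Proof. intros. unfold angular_deriv. rewrite D1_plus, D2_plus by auto. ring. Qed.

Lemma angular_deriv_scal k f a1 a2 u v :
  angular_deriv (fun u v => k * f u v) a1 a2 u v = k * angular_deriv f a1 a2 u v.
Proof. unfold angular_deriv. rewrite D1_scal, D2_scal. ring. Qed.

(** * Disjoint radial bumps *)

Section RadialBumps.
Variables (psi phi : R -> R -> R) (I : Type) (c : I -> R * R).
Hypothesis psi_continuous : continuous2 psi.
Hypothesis psi_compact : compactly_supported2 psi.
Hypothesis psi_radial : radial2 psi.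
Hypothesis psi_nonzero : exists z1 z2, psi z1 z2 <> 0.
Hypothesis supports_disjoint : forall i j : I, i <> j -> forall y1 y2,
  ~ (in_support2 (translate2 psi (c i)) y1 y2 /\ in_support2 (translate2 psi (c j)) y1 y2).
Hypothesis phi_sum : forall y1 y2,
  (exists i : I, translate2 psi (c i) y1 y2 <> 0 /\ phi y1 y2 = translate2 psi (c i) y1 y2) \/
  ((forall i : I, translate2 psi (c i) y1 y2 = 0) /\ phi y1 y2 = 0).

Definition nonzero_sqnorm (r : R) : Prop := exists z1 z2, psi z1 z2 <> 0 /\ r = z1 * z1 + z2 * z2.

Lemma nonzero_sqnorm_bound : bound nonzero_sqnorm.
Proof.
  destruct psi_compact as [M HM]. exists M. intros r [z1 [z2 [Hz ->]]].
  destruct (Rle_lt_dec (z1 * z1 + z2 * z2) M) as [h | h]; auto.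
  exfalso. apply Hz, HM. simpl. lra.
Qed.

Lemma nonzero_sqnorm_inhabited : exists r, nonzero_sqnorm r.
Proof. destruct psi_nonzero as [z1 [z2 Hz]]. exists (z1 * z1 + z2 * z2), z1, z2; auto. Qed.

(* [rad2] is the squared radius of the support of [psi]. *)
Definition rad2 : R :=
  proj1_sig (completeness nonzero_sqnorm nonzero_sqnorm_bound nonzero_sqnorm_inhabited).

Lemma rad2_lub : is_lub nonzero_sqnorm rad2.
Proof. unfold rad2. destruct completeness; auto. Qed.

Lemma rad2_ub z1 z2 : psi z1 z2 <> 0 -> z1 * z1 + z2 * z2 <= rad2.
Proof. intros H. apply (proj1 rad2_lub). exists z1, z2; auto. Qed.

Lemma rad2_approx d : 0 < d -> exists z1 z2, psi z1 z2 <> 0 /\ rad2 - d < z1 * z1 + z2 * z2.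
Proof.
  intros Hd. apply NNPP. intros N.
  assert (U : is_upper_bound nonzero_sqnorm (rad2 - d)).
  { intros r [z1 [z2 [Hz ->]]]. apply Rnot_lt_le. intros Hlt. apply N. exists z1, z2; auto. }
  generalize (proj2 rad2_lub _ U). lra.
Qed.

Lemma rad2_pos : 0 < rad2.
Proof.
  destruct psi_nonzero as [z1 [z2 Hz]].
  destruct (Req_dec (z1 * z1 + z2 * z2) 0) as [E | E]; [| generalize (rad2_ub _ _ Hz); nra].
  assert (z1 = 0) by nra. assert (z2 = 0) by nra. subst.
  destruct (continuity_2d_pt_neq_0 psi 0 0 (continuous2_continuity_2d_pt psi 0 0 psi_continuous) Hz)
    as [d Hd].
  assert (Hd2 : 0 < d / 2) by (generalize (cond_pos d); lra).
  assert (N : psi (d / 2) 0 <> 0).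
  { apply Hd; rewrite ?Rminus_0_r, ?Rabs_R0; [rewrite Rabs_right; lra | apply cond_pos]. }
  generalize (rad2_ub _ _ N). nra.
Qed.

Definition rad : R := sqrt rad2.

Lemma rad_pos : 0 < rad.
Proof. apply sqrt_lt_R0, rad2_pos. Qed.

Lemma rad_sq : rad * rad = rad2.
Proof. apply sqrt_sqrt, Rlt_le, rad2_pos. Qed.

Definition cx (i : I) : R := fst (c i).
Definition cy (i : I) : R := snd (c i).

Definition in_disc (i : I) (u v : R) : Prop := dist2 u v (cx i) (cy i) <= rad2.

Lemma translate_nonzero_in_disc i u v : translate2 psi (c i) u v <> 0 -> in_disc i u v.
Proof. intros H. apply rad2_ub in H. unfold in_disc, dist2, cx, cy. lra. Qed.

(* Shrink the circle point towards the centre onto a circle of radius [|z|]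
   close to [rad], where [psi] does not vanish by radial symmetry. *)
Lemma circle_in_support a1 a2 p1 p2 :
  dist2 p1 p2 a1 a2 = rad2 -> in_support2 (translate2 psi (a1, a2)) p1 p2.
Proof.
  intros Hp eps Heps.
  assert (HR := rad2_pos). assert (HRr := rad_pos).
  assert (Heta : 0 < eps * rad) by (apply Rmult_lt_0_compat; auto).
  destruct (rad2_approx _ Heta) as [z1 [z2 [Hz Hzr]]].
  generalize (rad2_ub _ _ Hz). intros Hub.
  set (r2 := z1 * z1 + z2 * z2) in *.
  set (s := sqrt (r2 / rad2)).
  assert (Hs2 : s * s = r2 / rad2) by (apply sqrt_sqrt, Rdiv_le_0_compat; unfold r2; nra).
  assert (Hs0 : 0 <= s) by apply sqrt_pos.
  assert (Hs1 : s <= 1).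
  { unfold s. rewrite <- sqrt_1. apply sqrt_le_1_alt.
    apply Rmult_le_reg_r with rad2; auto. unfold Rdiv; rewrite Rmult_assoc, Rinv_l; lra. }
  exists (a1 + s * (p1 - a1)), (a2 + s * (p2 - a2)). split.
  - replace ((p1 - (a1 + s * (p1 - a1))) ^ 2 + (p2 - (a2 + s * (p2 - a2))) ^ 2)
      with ((1 - s) * (1 - s) * rad2) by (rewrite <- Hp; unfold dist2; ring).
    assert (K : (1 - s) * rad2 <= rad2 - r2).
    { replace (rad2 - r2) with ((1 - s * s) * rad2) by (rewrite Hs2; field; lra).
      assert (0 <= s * (1 - s) * rad2) by (apply Rmult_le_pos; [apply Rmult_le_pos |]; lra). nra. }
    assert (K0 : 0 <= (1 - s) * rad2) by (apply Rmult_le_pos; lra).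
    assert (K2 : (1 - s) * rad2 * ((1 - s) * rad2) < eps * rad * (eps * rad))
      by (apply Rle_lt_trans with ((rad2 - r2) * (rad2 - r2));
          [apply Rmult_le_compat | apply Rmult_le_0_lt_compat]; lra).
    assert (K4 : eps * rad * (eps * rad) = eps ^ 2 * rad2) by (rewrite <- rad_sq; ring).
    apply Rmult_lt_reg_r with rad2; auto. nra.
  - unfold translate2; simpl.
    replace (a1 + s * (p1 - a1) - a1) with (s * (p1 - a1)) by ring.
    replace (a2 + s * (p2 - a2) - a2) with (s * (p2 - a2)) by ring.
    rewrite (psi_radial _ _ z1 z2); auto.
    transitivity (s * s * dist2 p1 p2 a1 a2); [unfold dist2; ring |].
    rewrite Hs2, Hp. unfold r2. field. lra.
Qed.

(* Two closed discs of radius [rad] at distance at most [2 rad] share a boundary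
   point, which would lie in both supports. *)
Lemma centers_far i j : i <> j -> 4 * rad2 < dist2 (cx i) (cy i) (cx j) (cy j).
Proof.
  intros Hij. apply Rnot_le_lt. intros Hle.
  assert (HR := rad2_pos).
  unfold cx, cy in Hle. destruct (c i) as [a1 a2] eqn:Ei, (c j) as [b1 b2] eqn:Ej. simpl in Hle.
  set (D := dist2 a1 a2 b1 b2) in *.
  assert (HD0 : 0 <= D) by apply dist2_nonneg.
  assert (Hpt : exists p1 p2, dist2 p1 p2 a1 a2 = rad2 /\ dist2 p1 p2 b1 b2 = rad2).
  { destruct (Req_dec D 0) as [D0 | D0].
    - destruct (dist2_eq0 _ _ _ _ D0) as [-> ->].
      exists (b1 + rad), b2. unfold dist2. rewrite <- rad_sq. split; ring.
    - set (t := sqrt ((rad2 - D / 4) / D)).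
      assert (Ht : t * t = (rad2 - D / 4) / D) by (apply sqrt_sqrt, Rdiv_le_0_compat; lra).
      exists (a1 + (b1 - a1) / 2 - t * (b2 - a2)), (a2 + (b2 - a2) / 2 + t * (b1 - a1)).
      split; (transitivity (D / 4 + t * t * D);
               [unfold D, dist2; field | rewrite Ht; field; lra]). }
  destruct Hpt as [p1 [p2 [H1 H2]]].
  apply (supports_disjoint i j Hij p1 p2). rewrite Ei, Ej. split; apply circle_in_support; auto.
Qed.

Lemma in_disc_unique i j u v : in_disc i u v -> in_disc j u v -> i = j.
Proof.
  intros Hi Hj. apply NNPP. intros N. generalize (centers_far i j N).
  generalize (dist2_le_sum (cx i) (cy i) (cx j) (cy j) u v).
  unfold in_disc in *. lra.
Qed.

Lemma phi_in_disc i u v : in_disc i u v -> phi u v = translate2 psi (c i) u v.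
Proof.
  intros Hi. destruct (phi_sum u v) as [[i' [Hn E]] | [Hz E]].
  - rewrite E. replace i' with i; auto.
    apply (in_disc_unique i i' u v); auto. apply translate_nonzero_in_disc; auto.
  - rewrite E, Hz; auto.
Qed.

Lemma phi_off_discs u v : (forall j, ~ in_disc j u v) -> phi u v = 0.
Proof.
  intros Hn. destruct (phi_sum u v) as [[i' [Hz E]] | [_ E]]; auto.
  exfalso. apply (Hn i'), translate_nonzero_in_disc; auto.
Qed.

Definition center_dist (p1 p2 : R) (j : I) : R := sqrt (dist2 (cx j) (cy j) p1 p2).

Lemma in_disc_center_dist j p1 p2 : in_disc j p1 p2 <-> center_dist p1 p2 j <= rad.
Proof.
  unfold in_disc, center_dist, rad. rewrite dist2_comm. split; intros H.
  - apply sqrt_le_1_alt; auto.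
  - rewrite <- (sqrt_sqrt _ (dist2_nonneg (cx j) (cy j) p1 p2)), <- rad_sq.
    apply Rmult_le_compat; auto; apply sqrt_pos.
Qed.

(* By [no_three_separated_points_near], at most two centres lie at distance less
   than [11/10 rad] from [p]; those outside their disc are at positive distance
   beyond [rad]. *)
Lemma center_dist_gap p1 p2 :
  exists e, 0 < e /\ forall j, center_dist p1 p2 j < rad + e -> center_dist p1 p2 j <= rad.
Proof.
  assert (HR := rad_pos).
  set (sd := center_dist p1 p2).
  assert (Near : forall j, sd j < rad + rad / 10 ->
                 dist2 (cx j) (cy j) p1 p2 < 121 / 100 * rad2).
  { intros j Hj. unfold sd, center_dist in Hj.
    rewrite <- (sqrt_sqrt _ (dist2_nonneg (cx j) (cy j) p1 p2)), <- rad_sq.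
    generalize (sqrt_pos (dist2 (cx j) (cy j) p1 p2)). nra. }
  apply NNPP. intros N.
  assert (Hbad : forall e, 0 < e -> exists j, rad < sd j < rad + e).
  { intros e He. apply NNPP. intros Ne. apply N. exists e. split; auto.
    intros j Hj. apply Rnot_lt_le. intros Hlt. apply Ne. exists j; auto. }
  assert (HR10 : 0 < rad / 10) by lra.
  destruct (Hbad _ HR10) as [j1 H1].
  destruct (Hbad (sd j1 - rad)) as [j2 H2]; [lra |].
  destruct (Hbad (sd j2 - rad)) as [j3 H3]; [lra |].
  assert (Hne : forall j j', sd j <> sd j' -> j <> j') by (intros j j' H E; subst; auto).
  apply (no_three_separated_points_near rad2 (cx j1) (cy j1) (cx j2) (cy j2) (cx j3) (cy j3) p1 p2);
    try apply rad2_pos; try apply centers_far; try apply Hne; try apply Near; lra.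
Qed.

Lemma discs_locally_finite p1 p2 :
  exists d, 0 < d /\ forall j u v, in_square p1 p2 d u v -> in_disc j u v -> in_disc j p1 p2.
Proof.
  destruct (center_dist_gap p1 p2) as [e [He Hgap]].
  exists (e / 2). split; [lra |]. intros j u v Huv Hj. apply in_disc_center_dist, Hgap.
  eapply Rle_lt_trans; [apply (sqrt_dist2_triangle _ _ u v) |].
  apply Rplus_le_lt_compat.
  - rewrite dist2_comm. unfold rad. apply sqrt_le_1_alt, Hj.
  - rewrite <- (sqrt_square e) by lra. apply sqrt_lt_1_alt.
    split; [apply dist2_nonneg | apply in_square_dist2; auto].
Qed.

Hypothesis phi_smooth : smooth2 phi.

Lemma phi_C1 : C1_2 phi.
Proof. apply smooth2_C1_2; auto. Qed.

Lemma D1_phi_C1 : C1_2 (D1 phi).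
Proof. apply smooth2_C1_2, smooth2_D1; auto. Qed.

Lemma D2_phi_C1 : C1_2 (D2 phi).
Proof. apply smooth2_C1_2, smooth2_D2; auto. Qed.

Lemma phi_zero_near p1 p2 : (forall j, ~ in_disc j p1 p2) ->
  exists d, 0 < d /\ forall u v, in_square p1 p2 d u v ->
    (forall j, ~ in_disc j u v) /\ phi u v = 0.
Proof.
  intros Hn. destruct (discs_locally_finite p1 p2) as [d [Hd Hloc]].
  exists d. split; auto. intros u v Huv.
  assert (Hu : forall j, ~ in_disc j u v) by (intros j Hj; apply (Hn j); eapply Hloc; eauto).
  split; auto. apply phi_off_discs; auto.
Qed.

Lemma grad_phi_off_discs p1 p2 : (forall j, ~ in_disc j p1 p2) ->
  D1 phi p1 p2 = 0 /\ D2 phi p1 p2 = 0.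
Proof.
  intros Hn. destruct (phi_zero_near p1 p2 Hn) as [d [Hd H]].
  rewrite (D1_local phi (fun _ _ => 0) p1 p2 d Hd), (D2_local phi (fun _ _ => 0) p1 p2 d Hd)
    by (intros; apply H; auto).
  split; [apply D1_const | apply D2_const].
Qed.

(* On a disc, [phi] is invariant under rotations about its centre. *)
Lemma angular_deriv_phi i w1 w2 : in_disc i w1 w2 -> angular_deriv phi (cx i) (cy i) w1 w2 = 0.
Proof.
  intros Hi.
  set (z1 := w1 - cx i). set (z2 := w2 - cy i).
  set (f := fun t => phi (cx i + (cos t * z1 - sin t * z2)) (cy i + (sin t * z1 + cos t * z2))).
  assert (Hrot : forall t, (cos t * z1 - sin t * z2) ^ 2 + (sin t * z1 + cos t * z2) ^ 2
                           = z1 ^ 2 + z2 ^ 2)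
    by (intros t; generalize (sin2_cos2 t); unfold Rsqr; intros; nra).
  assert (Hconst : forall t, f t = psi z1 z2).
  { intros t. unfold f. rewrite (phi_in_disc i).
    - unfold translate2. fold (cx i) (cy i). apply psi_radial.
      replace (cx i + (cos t * z1 - sin t * z2) - cx i) with (cos t * z1 - sin t * z2) by ring.
      replace (cy i + (sin t * z1 + cos t * z2) - cy i) with (sin t * z1 + cos t * z2) by ring.
      apply Hrot.
    - unfold in_disc, dist2 in *. fold z1 z2 in Hi.
      replace (cx i + (cos t * z1 - sin t * z2) - cx i) with (cos t * z1 - sin t * z2) by ring.
      replace (cy i + (sin t * z1 + cos t * z2) - cy i) with (sin t * z1 + cos t * z2) by ring.
      generalize (Hrot t). simpl. lra. }
  assert (Hderiv : is_derive f 0 (angular_deriv phi (cx i) (cy i) w1 w2)).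
  { apply is_derive_Reals. unfold f, angular_deriv.
    replace ((w1 - cx i) * D2 phi w1 w2 - (w2 - cy i) * D1 phi w1 w2)
      with (D1 phi w1 w2 * (- z2) + D2 phi w1 w2 * z1) by (unfold z1, z2; ring).
    apply (derivable_pt_lim_comp_2d phi (fun t => cx i + (cos t * z1 - sin t * z2))
             (fun t => cy i + (sin t * z1 + cos t * z2))).
    - rewrite cos_0, sin_0.
      replace (cx i + (1 * z1 - 0 * z2)) with w1 by (unfold z1; ring).
      replace (cy i + (0 * z1 + 1 * z2)) with w2 by (unfold z2; ring).
      apply C1_2_differentiable, phi_C1.
    - apply is_derive_Reals. auto_derive; auto. rewrite cos_0, sin_0. ring.
    - apply is_derive_Reals. auto_derive; auto. rewrite cos_0, sin_0. ring. }
  rewrite <- (is_derive_unique _ _ _ Hderiv), (Derive_ext f (fun _ => psi z1 z2)) by auto.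
  apply Derive_const.
Qed.

Lemma phi_near_disc i p1 p2 : in_disc i p1 p2 ->
  exists d, 0 < d /\ forall u v, in_square p1 p2 d u v ->
    (forall j, in_disc j u v -> j = i) /\
    angular_deriv phi (cx i) (cy i) u v = 0 /\
    (~ in_disc i u v -> D1 phi u v = 0 /\ D2 phi u v = 0).
Proof.
  intros Hi. destruct (discs_locally_finite p1 p2) as [d [Hd Hloc]].
  exists d. split; auto. intros u v Huv.
  assert (U : forall j, in_disc j u v -> j = i)
    by (intros j Hj; apply (in_disc_unique j i p1 p2); eauto).
  assert (Z : ~ in_disc i u v -> D1 phi u v = 0 /\ D2 phi u v = 0).
  { intros Hn. apply grad_phi_off_discs. intros j Hj. apply Hn. rewrite <- (U j Hj). auto. }
  split; [auto | split; [| auto]].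
  destruct (classic (in_disc i u v)) as [Hin | Hn]; [apply angular_deriv_phi; auto |].
  unfold angular_deriv. destruct (Z Hn) as [-> ->]. ring.
Qed.

Lemma angular_deriv_D_phi i p1 p2 : in_disc i p1 p2 ->
  angular_deriv (D1 phi) (cx i) (cy i) p1 p2 = - D2 phi p1 p2 /\
  angular_deriv (D2 phi) (cx i) (cy i) p1 p2 = D1 phi p1 p2.
Proof.
  intros Hi. destruct (phi_near_disc i p1 p2 Hi) as [d [Hd H]].
  assert (E : forall u v, in_square p1 p2 d u v ->
                angular_deriv phi (cx i) (cy i) u v = (fun _ _ => 0) u v)
    by (intros; apply H; auto).
  generalize (D1_local _ _ _ _ _ Hd E) (D2_local _ _ _ _ _ Hd E).
  rewrite D1_angular_deriv, D2_angular_deriv, D1_const, D2_const by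
    (apply D1_phi_C1 || apply D2_phi_C1).
  unfold angular_deriv. rewrite smooth2_D1_D2 by auto. split; lra.
Qed.

(* The value off the discs is irrelevant: there [A] vanishes in the fluxes below. *)
Definition center_of (u v : R) : R * R :=
  match excluded_middle_informative (exists j, in_disc j u v) with
  | left H => c (proj1_sig (constructive_indefinite_description _ H))
  | right _ => (u, v)
  end.

Lemma center_of_in_disc j u v : in_disc j u v -> center_of u v = c j.
Proof.
  intros Hj. unfold center_of. destruct excluded_middle_informative as [H | H].
  - destruct constructive_indefinite_description as [j' Hj']. simpl.
    rewrite (in_disc_unique j' j u v); auto.
  - exfalso; apply H; exists j; auto.
Qed.

Lemma center_of_off_discs u v : (forall j, ~ in_disc j u v) -> center_of u v = (u, v).
Proof.
  intros Hn. unfold center_of. destruct excluded_middle_informative as [[j Hj] | H]; auto.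
  exfalso; apply (Hn j Hj).
Qed.

(* Near [(u, v)] both [w - c i] and [w + (p, q) - c j] are orthogonal to the
   non-vanishing gradient of [phi], hence parallel on a whole square, which forces
   [c j = c i + (p, q)]. *)
Lemma period_shifts_center p q i j u v : periodic_along phi p q ->
  in_disc i u v -> in_disc j (u + p) (v + q) -> ~ (D1 phi u v = 0 /\ D2 phi u v = 0) ->
  cx j = cx i + p /\ cy j = cy i + q.
Proof.
  intros Hp Hi Hj Hg.
  destruct (phi_near_disc i u v Hi) as [d1 [Hd1 L1]].
  destruct (phi_near_disc j (u + p) (v + q) Hj) as [d2 [Hd2 L2]].
  destruct (continuous2_not_both_zero_near (D1 phi) (D2 phi) u v
              (C1_2_continuous _ D1_phi_C1) (C1_2_continuous _ D2_phi_C1) Hg) as [d3 [Hd3 L3]].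
  set (t := Rmin d1 (Rmin d2 d3) / 2).
  assert (Ht : 0 < t /\ t < d1 /\ t < d2 /\ t < d3).
  { assert (H0 := Rmin_pos d1 (Rmin d2 d3) Hd1 (Rmin_pos _ _ Hd2 Hd3)).
    assert (M1 := Rmin_l d1 (Rmin d2 d3)). assert (M2 := Rmin_r d1 (Rmin d2 d3)).
    assert (M3 := Rmin_l d2 d3). assert (M4 := Rmin_r d2 d3). unfold t. lra. }
  assert (Key : forall w1 w2, Rabs (w1 - u) <= t -> Rabs (w2 - v) <= t ->
     (w1 - cx i) * (w2 + q - cy j) - (w2 - cy i) * (w1 + p - cx j) = 0).
  { intros w1 w2 H1 H2.
    assert (S2 : in_square (u + p) (v + q) d2 (w1 + p) (w2 + q)).
    { split; [replace (w1 + p - (u + p)) with (w1 - u) by ring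
             | replace (w2 + q - (v + q)) with (w2 - v) by ring]; lra. }
    destruct (L1 w1 w2 ltac:(split; lra)) as [_ [J1 _]].
    destruct (L2 (w1 + p) (w2 + q) S2) as [_ [J2 _]].
    unfold angular_deriv in J1, J2.
    rewrite (D1_periodic phi p q Hp), (D2_periodic phi p q Hp) in J2.
    apply (cross_eq0_common_nonzero _ _ _ _ (D1 phi w1 w2) (D2 phi w1 w2)); auto.
    apply L3; split; lra. }
  assert (Habs0 : Rabs (u - u) <= t) by (rewrite Rminus_diag, Rabs_R0; lra).
  assert (Habst : Rabs (u + t - u) <= t /\ Rabs (v + t - v) <= t).
  { replace (u + t - u) with t by ring. replace (v + t - v) with t by ring.
    rewrite Rabs_right by lra. lra. }
  assert (E0 := Key u v Habs0 ltac:(rewrite Rminus_diag, Rabs_R0; lra)).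
  assert (E1 := Key (u + t) v (proj1 Habst) ltac:(rewrite Rminus_diag, Rabs_R0; lra)).
  assert (E2 := Key u (v + t) Habs0 (proj2 Habst)).
  assert (Q1 : t * (q - cy j + cy i) = 0) by lra.
  assert (Q2 : t * (p - cx j + cx i) = 0) by lra.
  apply Rmult_integral in Q1. apply Rmult_integral in Q2. lra.
Qed.

Section Flux.
Variable A : R -> R -> R.
Hypothesis A_C1 : C1_2 A.
Hypothesis A_grad_zero : forall u v, D1 phi u v = 0 -> D2 phi u v = 0 -> A u v = 0.

Definition flux1 (u v : R) : R := A u v * (v - snd (center_of u v)).
Definition flux2 (u v : R) : R := A u v * (u - fst (center_of u v)).

Lemma flux_near p1 p2 :
  ((forall j, ~ in_disc j p1 p2) /\
     exists d, 0 < d /\ forall u v, in_square p1 p2 d u v -> flux1 u v = 0 /\ flux2 u v = 0)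
  \/ (exists i, in_disc i p1 p2 /\ exists d, 0 < d /\ forall u v, in_square p1 p2 d u v ->
        flux1 u v = A u v * (v - cy i) /\ flux2 u v = A u v * (u - cx i)).
Proof.
  destruct (classic (exists i, in_disc i p1 p2)) as [[i Hi] | N].
  - right. exists i. split; auto. destruct (phi_near_disc i p1 p2 Hi) as [d [Hd L]].
    exists d. split; auto. intros u v Huv. destruct (L u v Huv) as [U [_ Z]].
    unfold flux1, flux2. destruct (classic (in_disc i u v)) as [Hin | Hn].
    + rewrite (center_of_in_disc i u v Hin). auto.
    + rewrite center_of_off_discs by (intros j Hj; apply Hn; rewrite <- (U j Hj); auto).
      destruct (Z Hn) as [Z1 Z2]. simpl. rewrite (A_grad_zero u v Z1 Z2). split; ring.
  - left. assert (Hn : forall j, ~ in_disc j p1 p2) by (intros j Hj; apply N; exists j; auto).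
    split; auto. destruct (phi_zero_near p1 p2 Hn) as [d [Hd L]].
    exists d. split; auto. intros u v Huv.
    unfold flux1, flux2. rewrite center_of_off_discs by apply L, Huv. simpl. split; ring.
Qed.

Lemma C1_2_mult_affine a0 a1 a2 : C1_2 (fun u v => A u v * (a0 + u * a1 + v * a2)).
Proof. apply C1_2_mult; auto using C1_2_affine. Qed.

Lemma flux1_C1 : C1_2 flux1.
Proof.
  apply C1_2_local. intros p1 p2.
  destruct (flux_near p1 p2) as [[_ [d [Hd H]]] | [i [_ [d [Hd H]]]]].
  - exists (fun _ _ => 0), d. split; [auto | split; [apply C1_2_const | apply H]].
  - exists (fun u v => A u v * (- cy i + u * 0 + v * 1)), d.
    split; [auto | split; [apply C1_2_mult_affine |]].
    intros u v Huv. rewrite (proj1 (H u v Huv)). ring.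
Qed.

Lemma flux2_C1 : C1_2 flux2.
Proof.
  apply C1_2_local. intros p1 p2.
  destruct (flux_near p1 p2) as [[_ [d [Hd H]]] | [i [_ [d [Hd H]]]]].
  - exists (fun _ _ => 0), d. split; [auto | split; [apply C1_2_const | apply H]].
  - exists (fun u v => A u v * (- cx i + u * 1 + v * 0)), d.
    split; [auto | split; [apply C1_2_mult_affine |]].
    intros u v Huv. rewrite (proj2 (H u v Huv)). ring.
Qed.

Lemma flux_div p1 p2 :
  ((forall j, ~ in_disc j p1 p2) /\ D2 flux2 p1 p2 - D1 flux1 p1 p2 = 0)
  \/ (exists i, in_disc i p1 p2 /\
        D2 flux2 p1 p2 - D1 flux1 p1 p2 = angular_deriv A (cx i) (cy i) p1 p2).
Proof.
  destruct (flux_near p1 p2) as [[Hn [d [Hd H]]] | [i [Hi [d [Hd H]]]]].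
  - left. split; auto.
    rewrite (D1_local flux1 (fun _ _ => 0) p1 p2 d Hd), (D2_local flux2 (fun _ _ => 0) p1 p2 d Hd),
      D1_const, D2_const by (intros; apply H; auto).
    ring.
  - right. exists i. split; auto.
    rewrite (D1_local flux1 (fun u v => A u v * (v - cy i)) p1 p2 d Hd),
      (D2_local flux2 (fun u v => A u v * (u - cx i)) p1 p2 d Hd) by (intros; apply H; auto).
    unfold D1 at 1, D2 at 1, angular_deriv. rewrite !Derive_scal_l.
    change (Derive (A p1) p2) with (D2 A p1 p2).
    change (Derive (fun x => A x p2) p1) with (D1 A p1 p2).
    ring.
Qed.

Lemma flux_periodic p q : periodic_along phi p q -> periodic_along A p q ->
  periodic_along flux1 p q /\ periodic_along flux2 p q.
Proof.
  intros Hp HAp.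
  assert (Hshift : forall u v, A u v <> 0 ->
            center_of (u + p) (v + q) = (fst (center_of u v) + p, snd (center_of u v) + q)).
  { intros u v HA.
    assert (Hg : ~ (D1 phi u v = 0 /\ D2 phi u v = 0))
      by (intros [G1 G2]; apply HA, A_grad_zero; auto).
    assert (Hg' : ~ (D1 phi (u + p) (v + q) = 0 /\ D2 phi (u + p) (v + q) = 0))
      by (rewrite (D1_periodic phi p q Hp), (D2_periodic phi p q Hp); auto).
    destruct (classic (exists i, in_disc i u v)) as [[i Hi] | N];
      [| exfalso; apply Hg, grad_phi_off_discs; intros j Hj; apply N; exists j; auto].
    destruct (classic (exists j, in_disc j (u + p) (v + q))) as [[j Hj] | N];
      [| exfalso; apply Hg', grad_phi_off_discs; intros j' Hj'; apply N; exists j'; auto].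
    rewrite (center_of_in_disc j _ _ Hj), (center_of_in_disc i _ _ Hi).
    destruct (period_shifts_center p q i j u v Hp Hi Hj Hg) as [E1 E2].
    unfold cx, cy in *. destruct (c j). simpl in *. rewrite E1, E2. auto. }
  split; intros u v; unfold flux1, flux2; rewrite HAp;
    (destruct (Req_dec (A u v) 0) as [Z | Z];
     [rewrite Z; ring | rewrite (Hshift u v Z); simpl; ring]).
Qed.

Lemma cell_int_angular_deriv (B : R -> R -> R) (a b : nat -> R) :
  (forall m, (m < 3)%nat -> periodic_along phi (a m) (b m)) ->
  (forall m, (m < 3)%nat -> periodic_along A (a m) (b m)) ->
  dot3 a a = 1 -> dot3 b b = 1 -> dot3 a b = 0 ->
  (forall i u v, in_disc i u v -> angular_deriv A (cx i) (cy i) u v = B u v) ->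
  (forall u v, (forall j, ~ in_disc j u v) -> B u v = 0) ->
  cell_int B a b = 0.
Proof.
  intros Hp HAp Haa Hbb Hab HB HB0.
  assert (Hper : forall m, (m < 3)%nat ->
            periodic_along flux1 (a m) (b m) /\ periodic_along flux2 (a m) (b m))
    by (intros; apply flux_periodic; auto).
  rewrite (cell_int_ext B (fun u v => D2 flux2 u v + (-1) * D1 flux1 u v)).
  - rewrite cell_int_plus, cell_int_scal, cell_int_D1, cell_int_D2;
      auto using flux1_C1, flux2_C1, continuous2_scal, C1_2_D1_continuous, C1_2_D2_continuous;
      try ring; intros m Hm; apply Hper; auto.
  - intros u v. destruct (flux_div u v) as [[Hn E] | [i [Hi E]]].
    + rewrite HB0; auto. lra.
    + rewrite <- (HB i u v Hi). lra.
Qed.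
End Flux.

Section Periods.
Variables a b : nat -> R.
Hypothesis phi_periodic : forall m, (m < 3)%nat -> periodic_along phi (a m) (b m).
Hypotheses (Haa : dot3 a a = 1) (Hbb : dot3 b b = 1) (Hab : dot3 a b = 0).

Lemma D_phi_periodic m : (m < 3)%nat ->
  periodic_along (D1 phi) (a m) (b m) /\ periodic_along (D2 phi) (a m) (b m).
Proof. intros Hm. split; [apply D1_periodic | apply D2_periodic]; auto. Qed.

Lemma cell_int_D1phi2_D2phi2 :
  cell_int (fun u v => D1 phi u v * D1 phi u v) a b =
  cell_int (fun u v => D2 phi u v * D2 phi u v) a b.
Proof.
  assert (H1 := D1_phi_C1). assert (H2 := D2_phi_C1).
  apply Rminus_diag_uniq. rewrite <- cell_int_minus
    by (apply continuous2_mult; apply C1_2_continuous; auto).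
  apply (cell_int_angular_deriv (fun u v => D1 phi u v * D2 phi u v)); auto.
  - apply C1_2_mult; auto.
  - intros u v -> ->. ring.
  - intros m Hm u v. destruct (D_phi_periodic m Hm) as [P1 P2]. rewrite P1, P2. auto.
  - intros i u v Hi. rewrite angular_deriv_mult by auto.
    destruct (angular_deriv_D_phi i u v Hi) as [-> ->]. ring.
  - intros u v Hn. destruct (grad_phi_off_discs u v Hn) as [-> ->]. ring.
Qed.

Lemma cell_int_D1phi_D2phi : cell_int (fun u v => D1 phi u v * D2 phi u v) a b = 0.
Proof.
  assert (H1 := D1_phi_C1). assert (H2 := D2_phi_C1).
  assert (Hsq1 : C1_2 (fun u v => D1 phi u v * D1 phi u v)) by (apply C1_2_mult; auto).
  assert (Hsq2 : C1_2 (fun u v => -1 * (D2 phi u v * D2 phi u v)))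
    by (apply C1_2_scal, C1_2_mult; auto).
  apply (Rmult_eq_reg_l (-4)); [| lra]. rewrite Rmult_0_r, <- cell_int_scal
    by (apply continuous2_mult; apply C1_2_continuous; auto).
  apply (cell_int_angular_deriv
           (fun u v => D1 phi u v * D1 phi u v + (-1) * (D2 phi u v * D2 phi u v))); auto.
  - apply C1_2_plus; auto.
  - intros u v -> ->. ring.
  - intros m Hm u v. destruct (D_phi_periodic m Hm) as [P1 P2]. rewrite P1, P2. auto.
  - intros i u v Hi.
    rewrite (angular_deriv_plus (fun u v => D1 phi u v * D1 phi u v)), (angular_deriv_scal (-1)),
      (angular_deriv_mult (D1 phi) (D1 phi)), (angular_deriv_mult (D2 phi) (D2 phi)) by auto.
    destruct (angular_deriv_D_phi i u v Hi) as [-> ->]. ring.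
  - intros u v Hn. destruct (grad_phi_off_discs u v Hn) as [-> ->]. ring.
Qed.
End Periods.
End RadialBumps.

Lemma cell_int_grad_radial (psi phi : R -> R -> R) (I : Type) (c : I -> R * R) (a b : nat -> R) :
  continuous2 psi -> compactly_supported2 psi -> radial2 psi ->
  (forall i j : I, i <> j -> forall y1 y2,
     ~ (in_support2 (translate2 psi (c i)) y1 y2 /\ in_support2 (translate2 psi (c j)) y1 y2)) ->
  (forall y1 y2,
     (exists i : I, translate2 psi (c i) y1 y2 <> 0 /\ phi y1 y2 = translate2 psi (c i) y1 y2) \/
     ((forall i : I, translate2 psi (c i) y1 y2 = 0) /\ phi y1 y2 = 0)) ->
  smooth2 phi ->
  (forall m, (m < 3)%nat -> periodic_along phi (a m) (b m)) ->
  dot3 a a = 1 -> dot3 b b = 1 -> dot3 a b = 0 ->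
  cell_int (fun u v => D1 phi u v * D1 phi u v) a b =
  cell_int (fun u v => D2 phi u v * D2 phi u v) a b /\
  cell_int (fun u v => D1 phi u v * D2 phi u v) a b = 0.
Proof.
  intros Hcont Hcpt Hrad Hdisj Hsum Hsmooth Hper Haa Hbb Hab.
  destruct (classic (exists z1 z2, psi z1 z2 <> 0)) as [Hnz | Hz].
  { split; [apply (cell_int_D1phi2_D2phi2 psi phi I c)
           | apply (cell_int_D1phi_D2phi psi phi I c)]; auto. }
  assert (Hphi0 : forall u v, phi u v = 0).
  { intros u v. destruct (Hsum u v) as [[i [Hn _]] | [_ E]]; auto.
    exfalso. apply Hz. exists (u - fst (c i)), (v - snd (c i)). auto. }
  assert (Hgrad0 : forall u v, D1 phi u v = 0 /\ D2 phi u v = 0).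
  { intros u v. unfold D1, D2.
    split; rewrite (Derive_ext _ (fun _ => 0)) by auto; apply Derive_const. }
  split; [| rewrite <- (cell_int_const0 a b)]; apply cell_int_ext; intros u v;
    destruct (Hgrad0 u v) as [-> ->]; ring.
Qed.

Lemma integrand_in_frame (xi a b : nat -> R) (phi : R -> R -> R) k l x :
  dot3 xi xi = 1 -> dot3 a a = 1 -> dot3 b b = 1 -> dot3 a b = 0 -> smooth2 phi ->
  (k < 3)%nat -> (l < 3)%nat ->
  let rho := fun x : nat -> R => phi (dot3 x a) (dot3 x b) in
  let W := fun (k : nat) (x : nat -> R) => rho x * xi k in
  let y1 := dot3 x a in let y2 := dot3 x b in
  W k x * sum3 (fun m => partial m (partial m (W l)) x)
  + sum3 (fun j => partial k (W j) x * partial l (W j) x) =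
  xi k * xi l * (phi y1 y2 * D1 (D1 phi) y1 y2 + phi y1 y2 * D2 (D2 phi) y1 y2)
  + dir_deriv phi (a k) (b k) y1 y2 * dir_deriv phi (a l) (b l) y1 y2.
Proof.
  intros Hxx Haa Hbb Hab Hphi Hk Hl rho W y1 y2.
  assert (H0 := smooth2_C1_2 _ Hphi).
  assert (H1 := smooth2_C1_2 _ (smooth2_D1 _ Hphi)).
  assert (H2 := smooth2_C1_2 _ (smooth2_D2 _ Hphi)).
  assert (HW : forall j, W j = fun x => rho x * xi j) by reflexivity.
  rewrite (sum3_ext (fun m => partial m (partial m (W l)) x)
             (fun m => dir_deriv (dir_deriv phi (a m) (b m)) (a m) (b m) y1 y2 * xi l))
    by (intros; rewrite HW, !partial_mult_const; unfold rho; rewrite partial2_comp; auto).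
  rewrite (sum3_ext (fun j => partial k (W j) x * partial l (W j) x)
             (fun j => dir_deriv phi (a k) (b k) y1 y2 * xi j
                       * (dir_deriv phi (a l) (b l) y1 y2 * xi j)))
    by (intros; rewrite HW, !partial_mult_const; unfold rho; rewrite !partial_comp; auto).
  replace (sum3 (fun m => dir_deriv (dir_deriv phi (a m) (b m)) (a m) (b m) y1 y2 * xi l))
    with (sum3 (fun m => dir_deriv (dir_deriv phi (a m) (b m)) (a m) (b m) y1 y2) * xi l)
    by (unfold sum3; ring).
  replace (sum3 (fun j => dir_deriv phi (a k) (b k) y1 y2 * xi j
                          * (dir_deriv phi (a l) (b l) y1 y2 * xi j)))
    with (dir_deriv phi (a k) (b k) y1 y2 * dir_deriv phi (a l) (b l) y1 y2 * dot3 xi xi)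
    by (unfold dot3, sum3; ring).
  rewrite sum3_dir_deriv2, Hxx by auto. unfold W, rho. fold y1 y2. ring.
Qed.

Lemma torus_int_grad_sq (a b : nat -> R) (phi : R -> R -> R) :
  dot3 a a = 1 -> dot3 b b = 1 -> dot3 a b = 0 -> C1_2 phi ->
  torus_int (fun x => sum3 (fun m => (partial m (fun x => phi (dot3 x a) (dot3 x b)) x) ^ 2)) =
  cell_int (fun u v => D1 phi u v * D1 phi u v) a b
  + cell_int (fun u v => D2 phi u v * D2 phi u v) a b.
Proof.
  intros Haa Hbb Hab Hphi.
  rewrite <- cell_int_plus, <- torus_int_cell_int; try apply continuous2_mult;
    auto using C1_2_D1_continuous, C1_2_D2_continuous.
  f_equal. apply functional_extensionality. intros x.
  rewrite <- (sum3_dir_deriv_sq a b Haa Hbb Hab). apply sum3_ext. intros m Hm.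
  rewrite partial_comp; auto.
Qed.

Lemma cell_int_frame_integrand (a b : nat -> R) (phi : R -> R -> R) s p1 p2 q1 q2 :
  dot3 a a = 1 -> dot3 b b = 1 -> dot3 a b = 0 -> smooth2 phi ->
  (forall m, (m < 3)%nat -> periodic_along phi (a m) (b m)) ->
  cell_int (fun u v => s * (phi u v * D1 (D1 phi) u v + phi u v * D2 (D2 phi) u v)
                       + dir_deriv phi p1 p2 u v * dir_deriv phi q1 q2 u v) a b =
  - s * (cell_int (fun u v => D1 phi u v * D1 phi u v) a b
         + cell_int (fun u v => D2 phi u v * D2 phi u v) a b)
  + p1 * q1 * cell_int (fun u v => D1 phi u v * D1 phi u v) a b
  + (p1 * q2 + p2 * q1) * cell_int (fun u v => D1 phi u v * D2 phi u v) a b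
  + p2 * q2 * cell_int (fun u v => D2 phi u v * D2 phi u v) a b.
Proof.
  intros Haa Hbb Hab Hsmooth Hper.
  assert (H0 := smooth2_C1_2 _ Hsmooth).
  assert (H1 := smooth2_C1_2 _ (smooth2_D1 _ Hsmooth)).
  assert (H2 := smooth2_C1_2 _ (smooth2_D2 _ Hsmooth)).
  assert (Hper1 : forall m, (m < 3)%nat ->
            periodic_along phi (a m) (b m) /\ periodic_along (D1 phi) (a m) (b m))
    by (intros; split; auto using D1_periodic).
  assert (Hper2 : forall m, (m < 3)%nat ->
            periodic_along phi (a m) (b m) /\ periodic_along (D2 phi) (a m) (b m))
    by (intros; split; auto using D2_periodic).
  assert (C11 : continuous2 (fun u v => phi u v * D1 (D1 phi) u v))
    by (apply continuous2_mult; [apply C1_2_continuous | apply C1_2_D1_continuous]; auto).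
  assert (C22 : continuous2 (fun u v => phi u v * D2 (D2 phi) u v))
    by (apply continuous2_mult; [apply C1_2_continuous | apply C1_2_D2_continuous]; auto).
  assert (Cdd : continuous2 (fun u v => dir_deriv phi p1 p2 u v * dir_deriv phi q1 q2 u v))
    by (apply continuous2_mult; apply continuous2_dir_deriv; auto).
  rewrite cell_int_plus, cell_int_scal, cell_int_plus;
    auto using continuous2_plus, continuous2_scal.
  rewrite (cell_int_parts1 phi (D1 phi)), (cell_int_parts2 phi (D2 phi)) by auto.
  unfold dir_deriv. rewrite cell_int_quadratic by (apply C1_2_continuous; auto).
  ring.
Qed.

Theorem lemma6p2
  (xi xi1 xi2 : nat -> R) (horth : orthonormal3 xi xi1 xi2)
  (phi psi : R -> R -> R)
  (hpsi_smooth : smooth2 psi) (hpsi_cpt : compactly_supported2 psi)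
  (hpsi_rad : radial2 psi)
  (I : Type) (c : I -> R * R)
  (hdisj : forall i j : I, i <> j -> forall y1 y2,
      ~ (in_support2 (translate2 psi (c i)) y1 y2 /\
         in_support2 (translate2 psi (c j)) y1 y2))
  (hsum : forall y1 y2,
      (exists i : I, translate2 psi (c i) y1 y2 <> 0 /\
                     phi y1 y2 = translate2 psi (c i) y1 y2) \/
      ((forall i : I, translate2 psi (c i) y1 y2 = 0) /\ phi y1 y2 = 0))
  (hphi_smooth : smooth2 phi)
  (hper : periodic3 (fun x => phi (dot3 x xi1) (dot3 x xi2))) :
  let rho := fun x : nat -> R => phi (dot3 x xi1) (dot3 x xi2) in
  let W := fun (k : nat) (x : nat -> R) => rho x * xi k in
  let C := torus_int (fun x => sum3 (fun m => (partial m rho x) ^ 2)) in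
  forall k l : nat, (k < 3)%nat -> (l < 3)%nat ->
    torus_int (fun x =>
        W k x * sum3 (fun m => partial m (partial m (W l)) x)
        + sum3 (fun j => partial k (W j) x * partial l (W j) x))
    = C / 2 * (delta k l - 3 * xi k * xi l).
Proof.
  intros rho W C k l Hk Hl.
  assert (Hper := periodic3_periodic_along phi xi xi1 xi2 horth hper).
  pose proof horth as [Hxx [H11 [H22 [_ [_ H12]]]]].
  destruct (cell_int_grad_radial psi phi I c xi1 xi2 (smooth2_continuous _ hpsi_smooth))
    as [HXY HZ]; auto.
  transitivity (cell_int (fun u v =>
      xi k * xi l * (phi u v * D1 (D1 phi) u v + phi u v * D2 (D2 phi) u v)
      + dir_deriv phi (xi1 k) (xi2 k) u v * dir_deriv phi (xi1 l) (xi2 l) u v) xi1 xi2).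
  { rewrite <- torus_int_cell_int. f_equal. apply functional_extensionality. intros x.
    apply integrand_in_frame; auto. }
  unfold C, rho. rewrite cell_int_frame_integrand, torus_int_grad_sq, HZ, <- HXY
    by auto using smooth2_C1_2.
  rewrite <- (orthonormal3_columns xi xi1 xi2 k l horth Hk Hl). field.
Qed.
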